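(* Let $0<k<1$, $\gamma>0$, $\delta>1$, and $Z=\{(\tau,s)\in\mathcal C:g(\tau,s)=0\}$. (W) If $1<\delta<\Phi$ and $\gamma>\gamma_-(\delta)$, then $Z=\emptyset$. (X) If $1<\delta<\Phi$ and $\gamma_+(\delta)<\gamma<\gamma_-(\delta)$, then there are $0<\tau_1<\tau_2<1$ such that $Z\cap(\{\tau\}\times S^1)$ has exactly two points for $\tau\in(\tau_1,\tau_2)$, is the single point $(\tau,3\pi/2)$ for $\tau\in\{\tau_1,\tau_2\}$, and is empty otherwise; $(\tau_1,3\pi/2)$ is a supercritical and $(\tau_2,3\pi/2)$ a subcritical fold point; $Z$ is a simple closed curve that is contractible in $\mathcal C$. (Y) If $1<\delta<\Phi$ and $0<\gamma<\gamma_+(\delta)$, then there are $0<a_1<a_2<a_3<a_4<1$ such that $Z\cap(\{\tau\}\times S^1)$ has exactly two points for $\tau\in(a_1,a_2)\cup(a_3,a_4)$, is the single point $(a_1,3\pi/2)$, $(a_2,\pi/2)$, $(a_3,\pi/2)$, $(a_4,3\pi/2)$ for $\tau=a_1,a_2,a_3,a_4$ respectively, and is empty otherwise; these four points are fold points, supercritical at $a_1,a_3$ and subcritical at $a_2,a_4$; $Z$ is the union of two disjoint simple closed curves, each non-contractible in $\mathcal C$. (Z) If $\delta>\Phi$, then there are $0<b_1<b_2<1$ such that $Z\cap(\{\tau\}\times S^1)$ has exactly two points for $\tau\in(b_1,b_2)$, is the single point $(b_1,\pi/2)$, resp. $(b_2,3\pi/2)$, for $\tau=b_1$, resp. $b_2$,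 and is empty otherwise; $(b_1,\pi/2)$ is a supercritical and $(b_2,3\pi/2)$ a subcritical fold point; $Z$ is a simple closed curve non-contractible in $\mathcal C$.
   Context: Let $S^1=\mathbb R/2\pi\mathbb Z$ and $\mathcal C=\{(\tau,s):0<\tau\le1,\ s\in S^1\}$. Let $p(\delta)=-\delta^2+\delta+1$, $\Phi=(1+\sqrt5)/2$. For parameters $\delta>1$, $\gamma>0$, $k>0$ define $g:\mathcal C\to\mathbb R$, $g(\tau,s)=\tau^{\delta^2}+\gamma\tau^{\delta^2-\delta}(1+k\sin s)-\tau$; thus $g(\tau,s)=0$ iff $\gamma(1+k\sin s)=\mathcal F_\delta(\tau)$, where $\mathcal F_\delta(\tau)=\tau^{p(\delta)}-\tau^\delta$. For $1<\delta<\Phi$, $M_{\mathcal F}(\delta)=\max_{(0,1]}\mathcal F_\delta>0$, $\gamma_+(\delta)=M_{\mathcal F}(\delta)/(1+k)$ and (for $k<1$) $\gamma_-(\delta)=M_{\mathcal F}(\delta)/(1-k)$. A fold point is a point $(\tau_0,s_0)\in\mathcal C$ with $g(\tau_0,s_0)=0$ and $\partial g/\partial s(\tau_0,s_0)=0$. It is supercritical if there is a neighbourhood $U$ of $(\tau_0,s_0)$ such that for $\tau>\tau_0$ close to $\tau_0$ the set $\{s:(\tau,s)\in U,\ g(\tau,s)=0\}$ has exactly two elements, for $\tau=\tau_0$ exactly one, and for $\tau<\tau_0$ close to $\tau_0$ none; subcritical if the same holds with the roles of $\tau>\tau_0$ and $\tau<\tau_0$ interchanged. *)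

From Stdlib Require Import Reals Lra.
Open Scope R_scope.

Definition pdelta (d : R) : R := - d ^ 2 + d + 1.
Definition Phi : R := (1 + sqrt 5) / 2.

Definition gfun (d gam k tau s : R) : R :=
  Rpower tau (d ^ 2) + gam * Rpower tau (d ^ 2 - d) * (1 + k * sin s) - tau.

Definition Ffun (d tau : R) : R := Rpower tau (pdelta d) - Rpower tau d.

Definition is_max_F (d M : R) : Prop :=
  (exists tau, 0 < tau <= 1 /\ Ffun d tau = M) /\
  (forall tau, 0 < tau <= 1 -> Ffun d tau <= M).

(* The cylinder C = (0,1] x S^1 is realized inside R^3 via the embedding
   (tau, s) |-> (tau, cos s, sin s); this identifies S^1 = R/2piZ with the
   unit circle and gives C its (subspace) topology. *)
Definition Rpt : Type := (R * R * R)%type.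
Definition emb (tau s : R) : Rpt := (tau, cos s, sin s).
Definition tcoord (p : Rpt) : R := fst (fst p).

Definition inC (p : Rpt) : Prop := exists tau s, 0 < tau <= 1 /\ p = emb tau s.

Definition Zset (d gam k : R) (p : Rpt) : Prop :=
  exists tau s, 0 < tau <= 1 /\ gfun d gam k tau s = 0 /\ p = emb tau s.

Definition slice (A : Rpt -> Prop) (tau : R) (p : Rpt) : Prop := A p /\ tcoord p = tau.

Definition is_empty (A : Rpt -> Prop) : Prop := forall p, ~ A p.
Definition is_singleton (A : Rpt -> Prop) (q : Rpt) : Prop := forall p, A p <-> p = q.
Definition has_exactly_one (A : Rpt -> Prop) : Prop := exists q, is_singleton A q.
Definition has_exactly_two (A : Rpt -> Prop) : Prop :=
  exists q1 q2, q1 <> q2 /\ forall p, A p <-> (p = q1 \/ p = q2).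

Definition dist3 (p q : Rpt) : R :=
  Rmax (Rabs (fst (fst p) - fst (fst q)))
       (Rmax (Rabs (snd (fst p) - snd (fst q))) (Rabs (snd p - snd q))).
Definition open3 (U : Rpt -> Prop) : Prop :=
  forall p, U p -> exists e, 0 < e /\ forall q, dist3 p q < e -> U q.

Definition fold_point (d gam k tau0 s0 : R) : Prop :=
  0 < tau0 <= 1 /\ gfun d gam k tau0 s0 = 0 /\
  derivable_pt_lim (fun s => gfun d gam k tau0 s) s0 0.

(* Neighbourhoods of a point of C are traces on C of open sets of R^3; the
   set {s : (tau,s) in U, g(tau,s)=0} corresponds to slice (U /\ Z) tau. *)
Definition supercritical (d gam k tau0 s0 : R) : Prop :=
  fold_point d gam k tau0 s0 /\
  exists U, open3 U /\ U (emb tau0 s0) /\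
  exists e, 0 < e /\
    (forall tau, tau0 < tau < tau0 + e ->
       has_exactly_two (slice (fun p => U p /\ Zset d gam k p) tau)) /\
    has_exactly_one (slice (fun p => U p /\ Zset d gam k p) tau0) /\
    (forall tau, tau0 - e < tau < tau0 ->
       is_empty (slice (fun p => U p /\ Zset d gam k p) tau)).

Definition subcritical (d gam k tau0 s0 : R) : Prop :=
  fold_point d gam k tau0 s0 /\
  exists U, open3 U /\ U (emb tau0 s0) /\
  exists e, 0 < e /\
    (forall tau, tau0 - e < tau < tau0 ->
       has_exactly_two (slice (fun p => U p /\ Zset d gam k p) tau)) /\
    has_exactly_one (slice (fun p => U p /\ Zset d gam k p) tau0) /\
    (forall tau, tau0 < tau < tau0 + e ->
       is_empty (slice (fun p => U p /\ Zset d gam k p) tau)).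

Definition cont01 (c : R -> Rpt) : Prop :=
  forall t, 0 <= t <= 1 -> forall e, 0 < e -> exists dl, 0 < dl /\
    forall u, 0 <= u <= 1 -> Rabs (u - t) < dl -> dist3 (c u) (c t) < e.

Definition simple_closed_param (c : R -> Rpt) (A : Rpt -> Prop) : Prop :=
  cont01 c /\ c 0 = c 1 /\
  (forall t u, 0 <= t <= 1 -> 0 <= u <= 1 -> c t = c u ->
     t = u \/ (t = 0 /\ u = 1) \/ (t = 1 /\ u = 0)) /\
  (forall p, A p <-> exists t, 0 <= t <= 1 /\ p = c t).

Definition contractible_in_C (c : R -> Rpt) : Prop :=
  exists H : R -> R -> Rpt,
    (forall t u, 0 <= t <= 1 -> 0 <= u <= 1 -> forall e, 0 < e ->
       exists dl, 0 < dl /\ forall t' u', 0 <= t' <= 1 -> 0 <= u' <= 1 ->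
         Rabs (t' - t) < dl -> Rabs (u' - u) < dl -> dist3 (H t' u') (H t u) < e) /\
    (forall t u, 0 <= t <= 1 -> 0 <= u <= 1 -> inC (H t u)) /\
    (forall t, 0 <= t <= 1 -> H t 0 = c t) /\
    (exists q, forall t, 0 <= t <= 1 -> H t 1 = q) /\
    (forall u, 0 <= u <= 1 -> H 0 u = H 1 u).

From Stdlib Require Import Reals Lra Lia Psatz ZArith Classical ClassicalEpsilon
  FunctionalExtensionality PropExtensionality.
From Coquelicot Require Compactness.
Open Scope R_scope.

(* With tau = exp x, g(tau, s) = exp ((d^2 - d) x) (gamma (1 + k sin s) - F(x)) where
   F(x) = exp (p x) - exp (d x), so Z is where the level gamma (1 + k sin s), which sweeps
   the band [gamma (1 - k), gamma (1 + k)] as s goes round the circle, meets F.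
   For 1 < delta < Phi we have p > 0 and F rises to its maximum M at a critical point
   and falls back to F(0) = 0; for delta > Phi we have p < 0 and F decreases. A slice has
   two points where F is inside the band, one point (at s = PI/2 or 3 PI/2) on its edges,
   none outside, and the edge crossings are folds. Over an interval where F is monotone and
   spans the band, Z is the graph of a continuous function over the whole circle; its
   discretised winding number is invariant under homotopy, so it is not contractible.
   When M lies inside the band, the levels below M are reached only over an arc of the
   circle and Z is one loop over that arc, which lifts to the strip and contracts. *)

Lemma unit_circle_param (y z : R) : y ^ 2 + z ^ 2 = 1 ->
  exists s, 0 <= s < 2 * PI /\ y = cos s /\ z = sin s.
Proof.
  intros Hyz. pose proof PI_RGT_0.
  assert (Hy : -1 <= y <= 1) by (split; nra).
  pose proof (acos_bound y). pose proof (cos_acos y Hy) as Hc. pose proof (sin_acos y Hy) as Hs.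
  assert (Hz : z ^ 2 = sqrt (1 - y²) ^ 2).
  { assert (0 <= 1 - y²) by (unfold Rsqr; nra).
    pose proof (sqrt_sqrt _ H1). unfold Rsqr in *. nra. }
  pose proof (sqrt_pos (1 - y²)).
  destruct (Rle_dec 0 z).
  - exists (acos y). split; [lra|]. split; [lra|]. rewrite Hs. nra.
  - exists (2 * PI - acos y).
    assert (acos y <> 0) by (intro E; rewrite E, sin_0 in Hs; rewrite <- Hs in Hz; nra).
    split; [lra|]. split.
    + rewrite cos_minus, cos_2PI, sin_2PI. lra.
    + rewrite sin_minus, cos_2PI, sin_2PI, Hs. nra.
Qed.

Lemma cos_sin_inj_lt_2PI (a b : R) : cos a = cos b -> sin a = sin b ->
  Rabs (a - b) < 2 * PI -> a = b.
Proof.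
  intros Hc Hs Hab. pose proof PI_RGT_0.
  assert (Hsin : sin (a - b) = 0) by (rewrite sin_minus, Hc, Hs; ring).
  assert (Hcos : cos (a - b) = 1)
    by (rewrite cos_minus, Hc, Hs; pose proof (sin2_cos2 b); unfold Rsqr in *; lra).
  destruct (sin_eq_0_0 _ Hsin) as [n Hn].
  assert (Hn2 : (-2 < n < 2)%Z)
    by (split; apply lt_IZR; apply Rabs_def2 in Hab; destruct Hab; nra).
  assert (n = 0 \/ n = 1 \/ n = -1)%Z as [E|[E|E]] by lia; subst n; simpl in Hn.
  - lra.
  - rewrite Hn, Rmult_1_l, cos_PI in Hcos. lra.
  - rewrite Hn in Hcos. replace (-1 * PI) with (- PI) in Hcos by ring.
    rewrite cos_neg, cos_PI in Hcos. lra.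
Qed.

Lemma cos_sin_inj_0_2PI (a b : R) : cos a = cos b -> sin a = sin b ->
  0 <= a <= 2 * PI -> 0 <= b <= 2 * PI ->
  a = b \/ (a = 0 /\ b = 2 * PI) \/ (a = 2 * PI /\ b = 0).
Proof.
  intros Hc Hs Ha Hb.
  destruct (Rlt_dec (Rabs (a - b)) (2 * PI)) as [Hlt|Hge].
  - left. exact (cos_sin_inj_lt_2PI a b Hc Hs Hlt).
  - right. destruct (Rle_dec 0 (a - b));
      [rewrite Rabs_pos_eq in Hge | rewrite Rabs_left in Hge]; lra.
Qed.

(** * Winding of loops on the circle factor *)

Definition Yc (p : Rpt) : R := snd (fst p).
Definition Zc (p : Rpt) : R := snd p.
Definition on_circle (p : Rpt) : Prop := Yc p ^ 2 + Zc p ^ 2 = 1.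
Definition near (p q : Rpt) : Prop := dist3 p q < 1 / 10.
Definition rotated_by (p q : Rpt) (a : R) : Prop :=
  Yc q = cos a * Yc p - sin a * Zc p /\ Zc q = sin a * Yc p + cos a * Zc p.

(* The signed angle from p to q, correct for nearby points of the circle. *)
Definition angle_between (p q : Rpt) : R :=
  atan ((Yc p * Zc q - Zc p * Yc q) / (Yc p * Yc q + Zc p * Zc q)).

Lemma dist3_ge_coords p q : Rabs (fst (fst p) - fst (fst q)) <= dist3 p q /\
  Rabs (Yc p - Yc q) <= dist3 p q /\ Rabs (Zc p - Zc q) <= dist3 p q.
Proof.
  unfold dist3, Yc, Zc.
  set (a := Rabs (fst (fst p) - fst (fst q))).
  set (b := Rabs (snd (fst p) - snd (fst q))). set (c := Rabs (snd p - snd q)).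
  pose proof (Rmax_l a (Rmax b c)). pose proof (Rmax_r a (Rmax b c)).
  pose proof (Rmax_l b c). pose proof (Rmax_r b c). lra.
Qed.

Lemma dist3_lt_coords p q e : Rabs (fst (fst p) - fst (fst q)) < e ->
  Rabs (Yc p - Yc q) < e -> Rabs (Zc p - Zc q) < e -> dist3 p q < e.
Proof. intros. unfold dist3. repeat apply Rmax_lub_lt; auto. Qed.

Lemma dist3_sym p q : dist3 p q = dist3 q p.
Proof.
  unfold dist3. rewrite (Rabs_minus_sym (fst (fst p))), (Rabs_minus_sym (snd (fst p))),
    (Rabs_minus_sym (snd p)). reflexivity.
Qed.

Lemma dist3_triangle p q r : dist3 p r <= dist3 p q + dist3 q r.
Proof.
  destruct (dist3_ge_coords p q) as [A1 [A2 A3]].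
  destruct (dist3_ge_coords q r) as [B1 [B2 B3]].
  assert (T : forall x y z, Rabs (x - z) <= Rabs (x - y) + Rabs (y - z)).
  { intros. replace (x - z) with ((x - y) + (y - z)) by ring. apply Rabs_triang. }
  unfold dist3 at 1. repeat apply Rmax_lub.
  - pose proof (T (fst (fst p)) (fst (fst q)) (fst (fst r))). lra.
  - pose proof (T (Yc p) (Yc q) (Yc r)). unfold Yc in *. lra.
  - pose proof (T (Zc p) (Zc q) (Zc r)). unfold Zc in *. lra.
Qed.

Lemma cos_sin_atan_ratio (D X : R) : 0 < D -> D ^ 2 + X ^ 2 = 1 ->
  cos (atan (X / D)) = D /\ sin (atan (X / D)) = X.
Proof.
  intros HD H. rewrite cos_atan, sin_atan.
  assert (E : sqrt (1 + (X / D)²) = / D).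
  { apply sqrt_lem_1.
    - unfold Rsqr. assert (0 <= (X / D) * (X / D)) by nra. lra.
    - left. apply Rinv_0_lt_compat. lra.
    - unfold Rsqr. transitivity ((D ^ 2 + X ^ 2) / (D * D)); [rewrite H|]; field; lra. }
  rewrite E. split; field; lra.
Qed.

Lemma atan_abs_lt_1 (r : R) : Rabs r < 1 -> - (PI / 4) < atan r < PI / 4.
Proof.
  intros H. apply Rabs_def2 in H. rewrite <- atan_1. split.
  - rewrite <- atan_opp. apply atan_increasing. lra.
  - apply atan_increasing. lra.
Qed.

Lemma angle_between_near p q : on_circle p -> on_circle q -> near p q ->
  - (PI / 4) < angle_between p q < PI / 4 /\ rotated_by p q (angle_between p q).
Proof.
  unfold on_circle, near, angle_between, rotated_by. intros Hp Hq Hd.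
  destruct (dist3_ge_coords p q) as [_ [H1 H2]].
  set (y := Yc p) in *. set (z := Zc p) in *. set (y' := Yc q) in *. set (z' := Zc q) in *.
  assert (Hy : Rabs (y - y') < 1 / 10) by lra. assert (Hz : Rabs (z - z') < 1 / 10) by lra.
  apply Rabs_def2 in Hy. apply Rabs_def2 in Hz.
  set (D := y * y' + z * z'). set (X := y * z' - z * y').
  assert (HDX : D ^ 2 + X ^ 2 = 1).
  { unfold D, X. replace 1 with ((y ^ 2 + z ^ 2) * (y' ^ 2 + z' ^ 2)) by (rewrite Hp, Hq; ring).
    ring. }
  (* [D] is the cosine of the angle, close to 1 since p and q are close. *)
  assert (HD : D = 1 - ((y - y') ^ 2 + (z - z') ^ 2) / 2).
  { assert (E : (y - y') ^ 2 + (z - z') ^ 2 = (y ^ 2 + z ^ 2) + (y' ^ 2 + z' ^ 2) - 2 * D)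
      by (unfold D; ring).
    rewrite Hp, Hq in E. lra. }
  assert (HD0 : 98 / 100 < D) by nra.
  assert (HX : Rabs (X / D) < 1).
  { assert (X ^ 2 < 1 - (98 / 100) ^ 2) by nra.
    apply Rabs_def1; apply Rmult_lt_reg_r with D; try lra;
      unfold Rdiv; rewrite Rmult_assoc, Rinv_l; nra. }
  split; [exact (atan_abs_lt_1 _ HX)|].
  destruct (cos_sin_atan_ratio D X) as [Ec Es]; [lra|exact HDX|].
  rewrite Ec, Es. unfold D, X. split.
  - transitivity (y' * (y ^ 2 + z ^ 2)); [rewrite Hp|]; ring.
  - transitivity (z' * (y ^ 2 + z ^ 2)); [rewrite Hp|]; ring.
Qed.

Lemma angle_between_rotated p q a : on_circle p -> rotated_by p q a ->
  - (PI / 2) < a < PI / 2 -> angle_between p q = a.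
Proof.
  unfold on_circle, rotated_by, angle_between. intros Hp [E1 E2] Ha.
  assert (Ed : Yc p * Yc q + Zc p * Zc q = cos a).
  { rewrite E1, E2. transitivity (cos a * (Yc p ^ 2 + Zc p ^ 2)); [ring|rewrite Hp; ring]. }
  assert (Ex : Yc p * Zc q - Zc p * Yc q = sin a).
  { rewrite E1, E2. transitivity (sin a * (Yc p ^ 2 + Zc p ^ 2)); [ring|rewrite Hp; ring]. }
  rewrite Ed, Ex. fold (tan a). apply atan_tan. lra.
Qed.

Lemma angle_between_self q : angle_between q q = 0.
Proof.
  unfold angle_between. replace (Yc q * Zc q - Zc q * Yc q) with 0 by ring.
  unfold Rdiv. rewrite Rmult_0_l. apply atan_0.
Qed.

Lemma rotated_by_comp p q r a b : rotated_by p q a -> rotated_by q r b ->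
  rotated_by p r (a + b).
Proof.
  unfold rotated_by. intros [E1 E2] [E3 E4].
  rewrite cos_plus, sin_plus, E3, E4, E1, E2. split; ring.
Qed.

Lemma rotated_by_unique p r a b : on_circle p -> rotated_by p r a -> rotated_by p r b ->
  - (PI / 2) < a < PI / 2 -> - (PI / 2) < b < PI / 2 -> a = b.
Proof.
  intros Hp Ha Hb Ia Ib.
  rewrite <- (angle_between_rotated p r a), <- (angle_between_rotated p r b); auto.
Qed.

Fixpoint winding_sum (g : nat -> Rpt) (N : nat) : R :=
  match N with O => 0 | S n => winding_sum g n + angle_between (g n) (g (S n)) end.

(* Around each small square of nearby points the four angles sum to zero, so the
   difference telescopes. *)
Lemma winding_sum_sub (g h : nat -> Rpt) (N : nat) :
  (forall i, (i <= N)%nat -> on_circle (g i) /\ on_circle (h i) /\ near (h i) (g i)) ->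
  (forall i, (i < N)%nat -> near (g i) (g (S i)) /\ near (h i) (h (S i))) ->
  winding_sum g N - winding_sum h N = angle_between (h N) (g N) - angle_between (h O) (g O).
Proof.
  pose proof PI_RGT_0.
  induction N as [|N IH]; intros Hu Hc; [simpl; ring|]. simpl.
  assert (E := IH ltac:(intros; apply Hu; lia) ltac:(intros; apply Hc; lia)).
  destruct (Hu N ltac:(lia)) as [ugN [uhN chgN]].
  destruct (Hu (S N) ltac:(lia)) as [ugS [uhS chgS]].
  destruct (Hc N ltac:(lia)) as [cg ch].
  destruct (angle_between_near _ _ uhN ugN chgN) as [Ic Rc].
  destruct (angle_between_near _ _ ugN ugS cg) as [Id Rd].
  destruct (angle_between_near _ _ uhN uhS ch) as [Ia Ra].
  destruct (angle_between_near _ _ uhS ugS chgS) as [Ib Rb].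
  pose proof (rotated_by_unique _ _ _ _ uhN (rotated_by_comp _ _ _ _ _ Rc Rd)
    (rotated_by_comp _ _ _ _ _ Ra Rb) ltac:(lra) ltac:(lra)).
  lra.
Qed.

Lemma winding_sum_closed_eq (g h : nat -> Rpt) (N : nat) :
  (forall i, (i <= N)%nat -> on_circle (g i) /\ on_circle (h i) /\ near (h i) (g i)) ->
  (forall i, (i < N)%nat -> near (g i) (g (S i)) /\ near (h i) (h (S i))) ->
  g N = g O -> h N = h O -> winding_sum g N = winding_sum h N.
Proof.
  intros Hu Hc Eg Eh. pose proof (winding_sum_sub g h N Hu Hc) as E.
  rewrite Eg, Eh in E. lra.
Qed.

Lemma winding_sum_ext (g h : nat -> Rpt) (N : nat) :
  (forall i, (i <= N)%nat -> g i = h i) -> winding_sum g N = winding_sum h N.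
Proof.
  induction N as [|N IH]; intros E; simpl; [reflexivity|].
  rewrite (IH ltac:(intros; apply E; lia)), (E N), (E (S N)) by lia. reflexivity.
Qed.

Lemma winding_sum_const (q : Rpt) (N : nat) : winding_sum (fun _ => q) N = 0.
Proof. induction N as [|N IH]; simpl; [|rewrite IH, angle_between_self]; ring. Qed.

Lemma winding_sum_circle (g : nat -> Rpt) (N : nat) : 4 < INR N ->
  (forall i, (i <= N)%nat ->
     Yc (g i) = cos (2 * PI * (INR i / INR N)) /\ Zc (g i) = sin (2 * PI * (INR i / INR N))) ->
  winding_sum g N = 2 * PI.
Proof.
  intros HN Hg. pose proof PI_RGT_0.
  assert (Hstep : 0 < 2 * PI / INR N < PI / 2).
  { split; [apply Rdiv_lt_0_compat; lra|].
    apply (Rmult_lt_reg_r (INR N)); [lra|]. unfold Rdiv. rewrite Rmult_assoc, Rinv_l; nra. }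
  enough (forall n, (n <= N)%nat -> winding_sum g n = INR n * (2 * PI / INR N)) as E.
  { rewrite E by lia. field. lra. }
  induction n as [|n IH]; intros Hn; [simpl; ring|].
  simpl winding_sum. rewrite IH, S_INR by lia.
  destruct (Hg n ltac:(lia)) as [A1 A2]. destruct (Hg (S n) ltac:(lia)) as [B1 B2].
  rewrite (angle_between_rotated _ _ (2 * PI / INR N)); [ring| | |lra].
  - unfold on_circle. rewrite A1, A2. pose proof (sin2_cos2 (2 * PI * (INR n / INR N))).
    unfold Rsqr in *. lra.
  - unfold rotated_by. rewrite A1, A2, B1, B2, S_INR.
    replace (2 * PI * ((INR n + 1) / INR N)) with (2 * PI * (INR n / INR N) + 2 * PI / INR N)
      by (field; lra).
    rewrite cos_plus, sin_plus. split; ring.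
Qed.

Definition continuous_on_square (H : R -> R -> Rpt) : Prop :=
  forall t u, 0 <= t <= 1 -> 0 <= u <= 1 -> forall e, 0 < e ->
    exists dl, 0 < dl /\ forall t' u', 0 <= t' <= 1 -> 0 <= u' <= 1 ->
      Rabs (t' - t) < dl -> Rabs (u' - u) < dl -> dist3 (H t' u') (H t u) < e.

(* Uniform continuity, from the Lebesgue-number lemma [compactness_value_2d]
   applied to half the moduli of pointwise continuity. *)
Lemma continuous_on_square_uniform (H : R -> R -> Rpt) : continuous_on_square H ->
  forall e, 0 < e -> exists dl, 0 < dl /\ forall t u t' u',
    0 <= t <= 1 -> 0 <= u <= 1 -> 0 <= t' <= 1 -> 0 <= u' <= 1 ->
    Rabs (t' - t) < dl -> Rabs (u' - u) < dl -> dist3 (H t' u') (H t u) < e.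
Proof.
  intros Hc e He.
  assert (Hmod : forall v w, {dl : posreal | 0 <= v <= 1 -> 0 <= w <= 1 ->
    forall t u, 0 <= t <= 1 -> 0 <= u <= 1 -> Rabs (t - v) < 2 * dl -> Rabs (u - w) < 2 * dl ->
      dist3 (H t u) (H v w) < e / 2}).
  { intros v w. apply constructive_indefinite_description.
    destruct (classic (0 <= v <= 1 /\ 0 <= w <= 1)) as [[Hv Hw]|Hout].
    - destruct (Hc v w Hv Hw (e / 2) ltac:(lra)) as [dl [Hdl P]].
      exists (mkposreal (dl / 2) ltac:(lra)). simpl. intros _ _ t u Ht Hu Htv Huw.
      apply P; auto; lra.
    - exists (mkposreal 1 Rlt_0_1). intros Hv Hw. tauto. }
  destruct (Compactness.compactness_value_2d 0 1 0 1 (fun v w => proj1_sig (Hmod v w)))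
    as [d Hd].
  exists d. split; [apply cond_pos|]. intros t u t' u' Ht Hu Ht' Hu' Htt Huu.
  apply NNPP. intro Hfar. apply (Hd t u Ht Hu). intros [v [w [Hv [Hw [Htv [Huw Hdv]]]]]].
  apply Hfar. revert Htv Huw Hdv. destruct (Hmod v w) as [dv P]. simpl. intros Htv Huw Hdv.
  pose proof (cond_pos dv). pose proof (cond_pos d).
  pose proof (P Hv Hw t u Ht Hu ltac:(lra) ltac:(lra)) as D1.
  assert (D2 : dist3 (H t' u') (H v w) < e / 2).
  { apply P; auto.
    - replace (t' - v) with ((t' - t) + (t - v)) by ring.
      pose proof (Rabs_triang (t' - t) (t - v)). lra.
    - replace (u' - w) with ((u' - u) + (u - w)) by ring.
      pose proof (Rabs_triang (u' - u) (u - w)). lra. }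
  pose proof (dist3_triangle (H t' u') (H v w) (H t u)). rewrite (dist3_sym (H v w)) in *.
  lra.
Qed.

Lemma exists_fine_mesh (dl : R) : 0 < dl -> exists N : nat, 4 < INR N /\ / INR N < dl.
Proof.
  intros Hdl. destruct (archimed (4 + / dl)) as [Hup _].
  assert (0 < / dl) by (apply Rinv_0_lt_compat; lra).
  exists (Z.to_nat (up (4 + / dl))).
  rewrite INR_IZR_INZ, Z2Nat.id; [|apply le_IZR; simpl; lra].
  split; [lra|]. rewrite <- (Rinv_inv dl) at 2. apply Rinv_lt_contravar; [nra|lra].
Qed.

Lemma inC_on_circle p : inC p -> on_circle p.
Proof.
  intros [tau [s [_ E]]]. subst p. unfold on_circle, emb, Yc, Zc. simpl.
  pose proof (sin2_cos2 s). unfold Rsqr in *. lra.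
Qed.

(* A homotopy in C through closed loops preserves the winding sums of its rows
   on a fine grid; the loop winding once around has sum 2 PI, a constant loop 0. *)
Lemma winding_loop_not_contractible (c : R -> Rpt) :
  (forall t, 0 <= t <= 1 -> Yc (c t) = cos (2 * PI * t) /\ Zc (c t) = sin (2 * PI * t)) ->
  ~ contractible_in_C c.
Proof.
  intros Hc [H [Hcont [HinC [H0 [[q Hq] Hper]]]]]. pose proof PI_RGT_0.
  destruct (continuous_on_square_uniform H Hcont (1 / 10) ltac:(lra)) as [dl [Hdl Huc]].
  destruct (exists_fine_mesh dl Hdl) as [N [HN Hmesh]].
  set (pt (i : nat) := INR i / INR N).
  assert (Hpt : forall i, (i <= N)%nat -> 0 <= pt i <= 1).
  { intros i Hi. apply le_INR in Hi. pose proof (pos_INR i). unfold pt.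
    split; [apply Rmult_le_pos; [lra|left; apply Rinv_0_lt_compat; lra]|].
    apply (Rmult_le_reg_r (INR N)); [lra|]. unfold Rdiv. rewrite Rmult_assoc, Rinv_l; lra. }
  assert (Hstep : forall i j, (i = j \/ i = S j \/ j = S i) -> Rabs (pt i - pt j) < dl).
  { intros i j [E|[E|E]]; subst; unfold pt; [rewrite Rminus_diag, Rabs_R0; lra| |];
      rewrite S_INR; [|rewrite Rabs_minus_sym];
      replace ((INR _ + 1) / INR N - INR _ / INR N) with (/ INR N) by (field; lra);
      rewrite Rabs_pos_eq; try lra; left; apply Rinv_0_lt_compat; lra. }
  set (row (j i : nat) := H (pt i) (pt j)).
  assert (Hnear : forall i j i' j', (i <= N)%nat -> (j <= N)%nat -> (i' <= N)%nat ->
     (j' <= N)%nat -> (i = i' \/ i = S i' \/ i' = S i) -> (j = j' \/ j = S j' \/ j' = S j) ->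
     near (row j i) (row j' i')).
  { intros. apply Huc; auto. }
  assert (Hcirc : forall i j, (i <= N)%nat -> (j <= N)%nat -> on_circle (row j i))
    by (intros; apply inC_on_circle, HinC; auto).
  assert (Hrows : forall j, (j <= N)%nat -> winding_sum (row j) N = winding_sum (row O) N).
  { induction j as [|j IH]; intros Hj; [reflexivity|]. rewrite <- IH by lia.
    apply winding_sum_closed_eq.
    - intros i Hi. repeat split; try apply Hcirc; try lia. apply Hnear; lia.
    - intros i Hi. split; apply Hnear; lia.
    - unfold row, pt. rewrite Rdiv_diag, Rdiv_0_l by lra. symmetry. apply Hper, Hpt. lia.
    - unfold row, pt. rewrite Rdiv_diag, Rdiv_0_l by lra. symmetry. apply Hper, Hpt. lia. }
  assert (W0 : winding_sum (row O) N = 2 * PI).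
  { apply winding_sum_circle; auto. intros i Hi. unfold row. replace (pt O) with 0.
    - rewrite H0 by (apply Hpt; lia). apply Hc, Hpt. lia.
    - unfold pt. simpl. unfold Rdiv. ring. }
  assert (WN : winding_sum (row N) N = 0).
  { rewrite <- (winding_sum_const q N). apply winding_sum_ext. intros i Hi. unfold row.
    replace (pt N) with 1 by (unfold pt; field; lra). apply Hq, Hpt. lia. }
  pose proof (Hrows N (le_n N)). lra.
Qed.

(** * The function F in the variable x = ln tau *)

Definition Fexp (d x : R) : R := exp (pdelta d * x) - exp (d * x).
Definition Fexp_deriv (d x : R) : R := pdelta d * exp (pdelta d * x) - d * exp (d * x).

Lemma Ffun_Fexp d tau : Ffun d tau = Fexp d (ln tau).
Proof. reflexivity. Qed.

Lemma Fexp_0 d : Fexp d 0 = 0.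
Proof. unfold Fexp. rewrite !Rmult_0_r, exp_0. ring. Qed.

Lemma derivable_pt_lim_exp_scal (a x : R) :
  derivable_pt_lim (fun y => exp (a * y)) x (a * exp (a * x)).
Proof.
  pose proof (derivable_pt_lim_scal id a x 1 (derivable_pt_lim_id x)) as Hlin.
  rewrite Rmult_1_r in Hlin. rewrite Rmult_comm.
  exact (derivable_pt_lim_comp (fun y => a * y) exp x a _ Hlin (derivable_pt_lim_exp _)).
Qed.

Lemma derivable_pt_lim_Fexp d x : derivable_pt_lim (Fexp d) x (Fexp_deriv d x).
Proof.
  apply (derivable_pt_lim_minus (fun y => exp (pdelta d * y)) (fun y => exp (d * y)));
    apply derivable_pt_lim_exp_scal.
Qed.

Lemma continuity_Fexp d : continuity (Fexp d).
Proof.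
  intro x. apply derivable_continuous_pt. exists (Fexp_deriv d x). apply derivable_pt_lim_Fexp.
Qed.

Lemma incr_of_deriv_pos (f f' : R -> R) (x y : R) :
  (forall c, derivable_pt_lim f c (f' c)) -> (forall c, x < c < y -> 0 < f' c) ->
  x < y -> f x < f y.
Proof.
  intros Hd Hpos Hxy. destruct (MVT_cor2 f f' x y Hxy (fun c _ => Hd c)) as [c [E Hc]].
  pose proof (Hpos c Hc). nra.
Qed.

Lemma Phi_gt_1 : 1 < Phi.
Proof.
  unfold Phi. assert (1 < sqrt 5) by (rewrite <- sqrt_1; apply sqrt_lt_1; lra). lra.
Qed.

Lemma pdelta_factor d : pdelta d = - ((d - Phi) * (d - 1 + Phi)).
Proof.
  assert (Phi * Phi = Phi + 1)
    by (unfold Phi; pose proof (sqrt_sqrt 5 ltac:(lra)); field_simplify; nra).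
  unfold pdelta. nra.
Qed.

Lemma pdelta_pos d : 1 < d -> d < Phi -> 0 < pdelta d.
Proof. intros. rewrite pdelta_factor. pose proof Phi_gt_1. nra. Qed.

Lemma pdelta_neg d : 1 < d -> Phi < d -> pdelta d < 0.
Proof. intros. rewrite pdelta_factor. pose proof Phi_gt_1. nra. Qed.

Lemma pdelta_lt d : 1 < d -> pdelta d < d.
Proof. unfold pdelta. intros. nra. Qed.

Section Critical_point.
Variable d : R.
Hypotheses (hd : 1 < d) (hdP : d < Phi).

(* The unique critical point of [Fexp d], where [p exp (p x) = d exp (d x)]. *)
Definition xc : R := ln (pdelta d / d) / (d - pdelta d).

Lemma xc_neg : xc < 0.
Proof.
  pose proof (pdelta_pos d hd hdP). pose proof (pdelta_lt d hd). unfold xc.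
  assert (ln (pdelta d / d) < 0).
  { rewrite <- ln_1. apply ln_increasing; [apply Rdiv_lt_0_compat; lra|].
    apply (Rmult_lt_reg_r d); [lra|]. unfold Rdiv. rewrite Rmult_assoc, Rinv_l; lra. }
  apply Rdiv_neg_pos; lra.
Qed.

Lemma Fexp_deriv_sign c :
  (c < xc -> 0 < Fexp_deriv d c) /\ (xc < c -> Fexp_deriv d c < 0).
Proof.
  pose proof (pdelta_pos d hd hdP). pose proof (pdelta_lt d hd).
  assert (E : Fexp_deriv d c
              = exp (pdelta d * c) * (pdelta d - d * exp ((d - pdelta d) * c))).
  { unfold Fexp_deriv. replace (d * c) with (pdelta d * c + (d - pdelta d) * c) by ring.
    rewrite exp_plus. ring. }
  assert (Exc : d * exp ((d - pdelta d) * xc) = pdelta d).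
  { unfold xc. replace ((d - pdelta d) * (ln (pdelta d / d) / (d - pdelta d)))
      with (ln (pdelta d / d)) by (field; lra).
    rewrite exp_ln by (apply Rdiv_lt_0_compat; lra). field. lra. }
  pose proof (exp_pos (pdelta d * c)).
  rewrite E. split; intro Hc.
  - assert (exp ((d - pdelta d) * c) < exp ((d - pdelta d) * xc))
      by (apply exp_increasing; apply Rmult_lt_compat_l; lra).
    apply Rmult_lt_0_compat; nra.
  - assert (exp ((d - pdelta d) * xc) < exp ((d - pdelta d) * c))
      by (apply exp_increasing; apply Rmult_lt_compat_l; lra).
    assert (0 < exp (pdelta d * c) * - (pdelta d - d * exp ((d - pdelta d) * c)))
      by (apply Rmult_lt_0_compat; nra).
    lra.
Qed.

Lemma Fexp_increasing x y : x < y -> y <= xc -> Fexp d x < Fexp d y.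
Proof.
  intros. apply (incr_of_deriv_pos _ (Fexp_deriv d)); auto using derivable_pt_lim_Fexp.
  intros c Hc. apply Fexp_deriv_sign. lra.
Qed.

Lemma Fexp_decreasing x y : xc <= x -> x < y -> Fexp d y < Fexp d x.
Proof.
  intros. enough (- Fexp d x < - Fexp d y) by lra.
  apply (incr_of_deriv_pos (fun z => - Fexp d z) (fun z => - Fexp_deriv d z)); auto.
  - intro c. apply derivable_pt_lim_opp, derivable_pt_lim_Fexp.
  - intros c Hc. pose proof (proj2 (Fexp_deriv_sign c) ltac:(lra)). lra.
Qed.

Lemma Fexp_le_max x : Fexp d x <= Fexp d xc.
Proof.
  destruct (Rtotal_order x xc) as [L|[L|L]].
  - left. apply Fexp_increasing; lra.
  - subst. lra.
  - left. apply Fexp_decreasing; lra.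
Qed.

Lemma is_max_F_Fexp M : is_max_F d M -> M = Fexp d xc.
Proof.
  intros [[tau [Ht E]] Hle]. apply Rle_antisym.
  - rewrite <- E, Ffun_Fexp. apply Fexp_le_max.
  - pose proof xc_neg.
    assert (exp xc < 1) by (rewrite <- exp_0; apply exp_increasing; lra).
    pose proof (Hle (exp xc) ltac:(pose proof (exp_pos xc); lra)) as Hm.
    rewrite Ffun_Fexp, ln_exp in Hm. exact Hm.
Qed.

Lemma Fexp_lt_far_left c x : 0 < c -> x <= ln c / pdelta d -> Fexp d x < c.
Proof.
  intros. pose proof (pdelta_pos d hd hdP). unfold Fexp.
  assert (exp (pdelta d * x) <= c).
  { rewrite <- (exp_ln c) by lra.
    replace (ln c) with (pdelta d * (ln c / pdelta d)) by (field; lra).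
    destruct (Req_dec x (ln c / pdelta d)) as [E|E]; [rewrite E; lra|].
    left. apply exp_increasing. apply Rmult_lt_compat_l; lra. }
  pose proof (exp_pos (d * x)). lra.
Qed.

End Critical_point.

Section Beyond_Phi.
Variable d : R.
Hypotheses (hd : 1 < d) (hdP : Phi < d).

Lemma Fexp_decreasing_all x y : x < y -> Fexp d y < Fexp d x.
Proof.
  intros. enough (- Fexp d x < - Fexp d y) by lra.
  apply (incr_of_deriv_pos (fun z => - Fexp d z) (fun z => - Fexp_deriv d z)); auto.
  - intro c. apply derivable_pt_lim_opp, derivable_pt_lim_Fexp.
  - intros c _. pose proof (pdelta_neg d hd hdP).
    pose proof (exp_pos (pdelta d * c)). pose proof (exp_pos (d * c)).
    unfold Fexp_deriv. nra.
Qed.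

Lemma Fexp_gt_far_left C : 0 < C -> exists x, x < 0 /\ C < Fexp d x.
Proof.
  intros. pose proof (pdelta_neg d hd hdP).
  assert (0 < ln (C + 2)) by (rewrite <- ln_1; apply ln_increasing; lra).
  set (x := ln (C + 2) / pdelta d).
  assert (Hx : x < 0) by (apply Rdiv_pos_neg; lra).
  exists x. split; auto. unfold Fexp.
  replace (pdelta d * x) with (ln (C + 2)) by (unfold x; field; lra).
  rewrite exp_ln by lra.
  assert (exp (d * x) < 1) by (rewrite <- exp_0; apply exp_increasing; nra).
  lra.
Qed.

End Beyond_Phi.

Definition incr_on (f : R -> R) (a b : R) : Prop :=
  forall x y, a <= x -> x < y -> y <= b -> f x < f y.

Definition inv_on (f : R -> R) (a b L : R) : R :=
  epsilon (inhabits 0) (fun x => a <= x <= b /\ f x = L).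

Section Increasing_inverse.
Variables (f : R -> R) (a b : R).
Hypotheses (Hf : incr_on f a b) (Hfc : continuity f) (Hab : a <= b).

Lemma incr_on_le x y : a <= x -> x <= y -> y <= b -> f x <= f y.
Proof.
  intros. destruct (Req_dec x y) as [E|E]; [subst; lra|]. left. apply Hf; lra.
Qed.

Lemma inv_on_spec L : f a <= L <= f b -> a <= inv_on f a b L <= b /\ f (inv_on f a b L) = L.
Proof.
  intros HL. unfold inv_on. apply epsilon_spec.
  destruct (IVT_cor (fun x => f x - L) a b) as [z [Hz Ez]]; auto.
  - apply continuity_minus; auto. apply continuity_const. intros ? ?. reflexivity.
  - assert (0 <= f b - L) by lra. assert (f a - L <= 0) by lra. nra.
  - exists z. split; auto. lra.
Qed.

Lemma inv_on_unique L x : a <= x <= b -> f x = L -> inv_on f a b L = x.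
Proof.
  intros Hx E. subst L.
  destruct (inv_on_spec (f x)) as [H1 H2]; [split; apply incr_on_le; lra|].
  destruct (Rtotal_order (inv_on f a b (f x)) x) as [L|[L|L]]; auto.
  - pose proof (Hf (inv_on f a b (f x)) x ltac:(lra) L ltac:(lra)). lra.
  - pose proof (Hf x (inv_on f a b (f x)) ltac:(lra) L ltac:(lra)). lra.
Qed.

Lemma inv_on_lower_cont L0 e : f a <= L0 <= f b -> 0 < e -> exists dl, 0 < dl /\
  forall L, f a <= L <= f b -> L0 - dl < L -> inv_on f a b L0 - e < inv_on f a b L.
Proof.
  intros HL0 He. destruct (inv_on_spec L0 HL0) as [Hx0 Ex0].
  set (x0 := inv_on f a b L0) in *.
  destruct (Rlt_dec (x0 - e / 2) a) as [Ha|Ha].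
  - exists 1. split; [lra|]. intros L HL _. pose proof (inv_on_spec L HL). lra.
  - assert (f (x0 - e / 2) < L0) by (rewrite <- Ex0; apply Hf; lra).
    exists (L0 - f (x0 - e / 2)). split; [lra|]. intros L HL HL'.
    destruct (inv_on_spec L HL) as [I1 I2].
    destruct (Rle_dec (inv_on f a b L) (x0 - e / 2)) as [Hle|]; [|lra].
    pose proof (incr_on_le (inv_on f a b L) (x0 - e / 2)). lra.
Qed.

Lemma inv_on_upper_cont L0 e : f a <= L0 <= f b -> 0 < e -> exists dl, 0 < dl /\
  forall L, f a <= L <= f b -> L < L0 + dl -> inv_on f a b L < inv_on f a b L0 + e.
Proof.
  intros HL0 He. destruct (inv_on_spec L0 HL0) as [Hx0 Ex0].
  set (x0 := inv_on f a b L0) in *.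
  destruct (Rlt_dec b (x0 + e / 2)) as [Hb|Hb].
  - exists 1. split; [lra|]. intros L HL _. pose proof (inv_on_spec L HL). lra.
  - assert (L0 < f (x0 + e / 2)) by (rewrite <- Ex0; apply Hf; lra).
    exists (f (x0 + e / 2) - L0). split; [lra|]. intros L HL HL'.
    destruct (inv_on_spec L HL) as [I1 I2].
    destruct (Rle_dec (x0 + e / 2) (inv_on f a b L)) as [Hle|]; [|lra].
    pose proof (incr_on_le (x0 + e / 2) (inv_on f a b L)). lra.
Qed.

End Increasing_inverse.

Definition continuous_within (D : R -> Prop) (f : R -> R) : Prop :=
  forall y, D y -> forall e, 0 < e -> exists dl, 0 < dl /\
    forall y', D y' -> Rabs (y' - y) < dl -> Rabs (f y' - f y) < e.

Definition I01 (t : R) : Prop := 0 <= t <= 1.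

Lemma continuity_pt_eps f x : continuity_pt f x -> forall e, 0 < e -> exists dl, 0 < dl /\
  forall y, Rabs (y - x) < dl -> Rabs (f y - f x) < e.
Proof.
  intros H e He. destruct (H e He) as [dl [Hdl P]]. exists dl. split; auto.
  intros y Hy. destruct (Req_dec x y) as [E|E].
  - subst. rewrite Rminus_diag, Rabs_R0. exact He.
  - apply (P y). split; [split; [exact I|auto]|exact Hy].
Qed.

Lemma continuous_within_of_continuity D f : continuity f -> continuous_within D f.
Proof.
  intros H y _ e He. destruct (continuity_pt_eps f y (H y) e He) as [dl [Hdl P]].
  exists dl. split; auto.
Qed.

Lemma continuous_within_comp D E f g : continuous_within D f -> (forall y, D y -> E (f y)) -> continuous_within E g ->
  continuous_within D (fun y => g (f y)).
Proof.
  intros Hf Hm Hg y Hy e He.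
  destruct (Hg (f y) (Hm y Hy) e He) as [d1 [Hd1 P1]].
  destruct (Hf y Hy d1 Hd1) as [d2 [Hd2 P2]].
  exists d2. split; auto.
Qed.

Lemma continuous_within_comp_continuity D f g : continuous_within D f -> continuity g -> continuous_within D (fun y => g (f y)).
Proof.
  intros Hf Hg. apply (continuous_within_comp D (fun _ => True)); auto. apply continuous_within_of_continuity, Hg.
Qed.

Lemma continuous_within_inv_on f a b : incr_on f a b -> continuity f -> a <= b ->
  continuous_within (fun L => f a <= L <= f b) (inv_on f a b).
Proof.
  intros Hi Hc Hab L0 HL0 e He.
  destruct (inv_on_lower_cont f a b Hi Hc Hab L0 e HL0 He) as [d1 [Hd1 P1]].
  destruct (inv_on_upper_cont f a b Hi Hc Hab L0 e HL0 He) as [d2 [Hd2 P2]].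
  exists (Rmin d1 d2). split; [apply Rmin_pos; auto|].
  intros L HL HLL. pose proof (Rmin_l d1 d2). pose proof (Rmin_r d1 d2).
  apply Rabs_def2 in HLL. apply Rabs_def1.
  - pose proof (P2 L HL ltac:(lra)). lra.
  - pose proof (P1 L HL ltac:(lra)). lra.
Qed.

Lemma cont01_triple f1 f2 f3 : continuous_within I01 f1 -> continuous_within I01 f2 -> continuous_within I01 f3 ->
  cont01 (fun t => (f1 t, f2 t, f3 t)).
Proof.
  intros H1 H2 H3 t Ht e He.
  destruct (H1 t Ht e He) as [d1 [Hd1 P1]].
  destruct (H2 t Ht e He) as [d2 [Hd2 P2]].
  destruct (H3 t Ht e He) as [d3 [Hd3 P3]].
  exists (Rmin d1 (Rmin d2 d3)). split; [repeat apply Rmin_pos; auto|].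
  intros u Hu Hut. pose proof (Rmin_l d1 (Rmin d2 d3)). pose proof (Rmin_r d1 (Rmin d2 d3)).
  pose proof (Rmin_l d2 d3). pose proof (Rmin_r d2 d3).
  apply dist3_lt_coords; simpl; [apply P1|apply P2|apply P3]; auto; lra.
Qed.

Lemma cont01_emb_exp (x s : R -> R) : continuous_within I01 x -> continuous_within I01 s ->
  cont01 (fun t => emb (exp (x t)) (s t)).
Proof.
  intros Hx Hs. unfold emb. apply cont01_triple; apply continuous_within_comp_continuity; auto.
  - apply derivable_continuous, derivable_exp.
  - apply continuity_cos.
  - apply continuity_sin.
Qed.

(** * The zero set, its slices and its fold points *)

Definition level (g k s : R) : R := g * (1 + k * sin s).

Lemma gfun_exp d g k x s :
  gfun d g k (exp x) s = exp ((d ^ 2 - d) * x) * (level g k s - Fexp d x).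
Proof.
  unfold gfun, level, Fexp, Rpower. rewrite !ln_exp.
  replace (exp x) with (exp ((d ^ 2 - d) * x + pdelta d * x))
    by (f_equal; unfold pdelta; ring).
  replace (d ^ 2 * x) with ((d ^ 2 - d) * x + d * x) by ring.
  rewrite !exp_plus. ring.
Qed.

Lemma gfun_eq_0_iff d g k x s : gfun d g k (exp x) s = 0 <-> level g k s = Fexp d x.
Proof.
  rewrite gfun_exp. pose proof (exp_pos ((d ^ 2 - d) * x)). split; intro E.
  - apply Rmult_integral in E. lra.
  - rewrite E. ring.
Qed.

Lemma exp_le_1_iff x : exp x <= 1 <-> x <= 0.
Proof.
  rewrite <- exp_0. split; intro H.
  - destruct (Rle_dec x 0); auto. pose proof (exp_increasing 0 x ltac:(lra)). lra.
  - destruct (Req_dec x 0) as [E|E]; [subst; lra|]. left. apply exp_increasing. lra.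
Qed.

Lemma Zset_log d g k p :
  Zset d g k p <-> exists x s, x <= 0 /\ level g k s = Fexp d x /\ p = emb (exp x) s.
Proof.
  split.
  - intros [tau [s [Ht [Hg Hp]]]]. exists (ln tau), s.
    assert (E : tau = exp (ln tau)) by (rewrite exp_ln; lra).
    rewrite E in Ht, Hg, Hp. rewrite gfun_eq_0_iff in Hg. rewrite exp_le_1_iff in Ht. tauto.
  - intros [x [s [Hx [Hl Hp]]]]. exists (exp x), s.
    rewrite exp_le_1_iff, gfun_eq_0_iff. pose proof (exp_pos x). tauto.
Qed.

Lemma slice_Zset d g k tau p : slice (Zset d g k) tau p <->
  0 < tau <= 1 /\ exists s, level g k s = Fexp d (ln tau) /\ p = emb tau s.
Proof.
  unfold slice. rewrite Zset_log. split.
  - intros [[x [s [Hx [Hl Hp]]]] Ht]. subst p. unfold tcoord, emb in Ht. simpl in Ht. subst tau.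
    rewrite ln_exp, exp_le_1_iff. pose proof (exp_pos x). split; [tauto|]. exists s. auto.
  - intros [Ht [s [Hl Hp]]]. split; [|subst p; reflexivity].
    exists (ln tau), s. rewrite exp_ln by lra. split; [|tauto].
    rewrite <- exp_le_1_iff, exp_ln; lra.
Qed.

Lemma level_range g k s : 0 < g -> 0 < k -> g * (1 - k) <= level g k s <= g * (1 + k).
Proof.
  intros. unfold level. pose proof (SIN_bound s).
  assert (0 <= (g * k) * (sin s + 1)) by (apply Rmult_le_pos; nra).
  assert (0 <= (g * k) * (1 - sin s)) by (apply Rmult_le_pos; nra).
  split; nra.
Qed.

Lemma level_eq_iff g k s v : 0 < g -> 0 < k -> level g k s = g * (1 + k * v) <-> sin s = v.
Proof.
  unfold level. intros Hg Hk. split; intro E; [|rewrite E; reflexivity].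
  assert (Hz : g * k * (sin s - v) = 0) by nra.
  apply Rmult_integral in Hz. destruct Hz as [Hz|Hz]; [|lra].
  apply Rmult_integral in Hz. lra.
Qed.

Lemma continuity_level g k : continuity (level g k).
Proof.
  intro x. unfold level.
  apply continuity_pt_mult; [apply continuity_pt_const; intros ? ?; reflexivity|].
  apply continuity_pt_plus; [apply continuity_pt_const; intros ? ?; reflexivity|].
  apply continuity_pt_mult; [apply continuity_pt_const; intros ? ?; reflexivity|].
  apply continuity_sin.
Qed.

Lemma level_on_circle g k s s' : cos s = cos s' -> sin s = sin s' -> level g k s = level g k s'.
Proof. unfold level. intros _ ->. reflexivity. Qed.

Lemma continuity_opp_level g k : continuity (fun s => - level g k s).
Proof. apply (continuity_opp (level g k)), continuity_level. Qed.

Lemma cos_3PI_2 : cos (3 * PI / 2) = 0.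
Proof. replace (3 * PI / 2) with (3 * (PI / 2)) by field. apply cos_3PI2. Qed.

Lemma sin_3PI_2 : sin (3 * PI / 2) = -1.
Proof. replace (3 * PI / 2) with (3 * (PI / 2)) by field. apply sin_3PI2. Qed.

Lemma level_3PI_2 g k : level g k (3 * PI / 2) = g * (1 - k).
Proof. unfold level. rewrite sin_3PI_2. ring. Qed.

Lemma level_PI_2 g k : level g k (PI / 2) = g * (1 + k).
Proof. unfold level. rewrite sin_PI2. ring. Qed.

Section Slices.
Variables (d g k : R).
Hypotheses (hg : 0 < g) (hk : 0 < k < 1).

Lemma slice_two tau : 0 < tau <= 1 -> g * (1 - k) < Fexp d (ln tau) < g * (1 + k) ->
  has_exactly_two (slice (Zset d g k) tau).
Proof.
  intros Ht HF.
  set (v := (Fexp d (ln tau) / g - 1) / k).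
  assert (Ev : Fexp d (ln tau) = g * (1 + k * v)) by (unfold v; field; lra).
  assert (Hv : -1 < v < 1).
  { rewrite Ev in HF. split; apply (Rmult_lt_reg_l (g * k)); nra. }
  set (w := sqrt (1 - v ^ 2)).
  assert (Hw : 0 < w) by (apply sqrt_lt_R0; nra).
  assert (Hw2 : w ^ 2 = 1 - v ^ 2) by (unfold w; rewrite <- Rsqr_pow2; apply Rsqr_sqrt; nra).
  exists (tau, w, v), (tau, - w, v). split; [intro E; injection E; lra|].
  intro p. rewrite slice_Zset, Ev. split.
  - intros [_ [s [Hs Hp]]]. apply level_eq_iff in Hs; try lra. subst p. unfold emb. rewrite Hs.
    assert (cos s ^ 2 = w ^ 2)
      by (rewrite Hw2, <- Hs; pose proof (sin2_cos2 s); unfold Rsqr in *; lra).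
    assert (cos s = w \/ cos s = - w) as [E|E] by (apply Rsqr_eq; unfold Rsqr; lra);
      rewrite E; auto.
  - intros Hp. split; auto.
    assert (Hy : forall y, y ^ 2 + v ^ 2 = 1 ->
      exists s, level g k s = g * (1 + k * v) /\ (tau, y, v) = emb tau s).
    { intros y Hy. destruct (unit_circle_param y v Hy) as [s [_ [E1 E2]]]. exists s.
      rewrite level_eq_iff by lra. unfold emb. rewrite <- E1, <- E2. auto. }
    destruct Hp; subst p; apply Hy; nra.
Qed.

Lemma slice_extreme tau s0 v : 0 < tau <= 1 -> (v = 1 \/ v = -1) -> sin s0 = v ->
  Fexp d (ln tau) = g * (1 + k * v) -> is_singleton (slice (Zset d g k) tau) (emb tau s0).
Proof.
  intros Ht Hv Hs0 HF p. rewrite slice_Zset, HF. split.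
  - intros [_ [s [Hs Hp]]]. apply level_eq_iff in Hs; try lra. subst p. unfold emb.
    assert (Hc : forall r, sin r = v -> cos r = 0).
    { intros r Hr. pose proof (sin2_cos2 r). unfold Rsqr in *.
      assert (cos r * cos r = 0) by (destruct Hv; subst; nra). nra. }
    rewrite (Hc s Hs), (Hc s0 Hs0), Hs, Hs0. reflexivity.
  - intros Hp. split; auto. exists s0. split; auto. apply level_eq_iff; lra.
Qed.

Lemma slice_bottom tau : 0 < tau <= 1 -> Fexp d (ln tau) = g * (1 - k) ->
  is_singleton (slice (Zset d g k) tau) (emb tau (3 * PI / 2)).
Proof.
  intros. apply (slice_extreme _ _ (-1)); auto; [apply sin_3PI_2|]. rewrite H0. ring.
Qed.

Lemma slice_top tau : 0 < tau <= 1 -> Fexp d (ln tau) = g * (1 + k) ->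
  is_singleton (slice (Zset d g k) tau) (emb tau (PI / 2)).
Proof.
  intros. apply (slice_extreme _ _ 1); auto; [apply sin_PI2|]. rewrite H0. ring.
Qed.

Lemma slice_empty tau : (0 < tau <= 1 -> Fexp d (ln tau) < g * (1 - k) \/
                                          g * (1 + k) < Fexp d (ln tau)) ->
  is_empty (slice (Zset d g k) tau).
Proof.
  intros H p Hp. rewrite slice_Zset in Hp. destruct Hp as [Ht [s [Hs _]]].
  pose proof (level_range g k s hg ltac:(lra)). destruct (H Ht); lra.
Qed.

End Slices.

Lemma fold_point_of_cos_0 d g k tau s0 : 0 < tau <= 1 -> level g k s0 = Fexp d (ln tau) ->
  cos s0 = 0 -> fold_point d g k tau s0.
Proof.
  intros Ht Hl Hc. split; [exact Ht|]. split.
  - rewrite <- (exp_ln tau) by lra. apply gfun_eq_0_iff. exact Hl.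
  - set (C1 := g * Rpower tau (d ^ 2 - d) * k).
    assert (E : (fun s => gfun d g k tau s)
                = (fun s => (Rpower tau (d ^ 2) + g * Rpower tau (d ^ 2 - d) - tau) + C1 * sin s)).
    { apply functional_extensionality. intro s. unfold gfun, C1. ring. }
    rewrite E. replace 0 with (0 + C1 * cos s0) by (rewrite Hc; ring).
    apply derivable_pt_lim_plus; [apply derivable_pt_lim_const|].
    apply (derivable_pt_lim_scal sin C1 s0 (cos s0)), derivable_pt_lim_sin.
Qed.

(* The slice counts below hold globally, so the whole space serves as the neighbourhood. *)
Lemma open3_True : open3 (fun _ => True).
Proof. intros p _. exists 1. split; [lra|]. auto. Qed.

Lemma True_and_pred (A : Rpt -> Prop) : (fun p => True /\ A p) = A.
Proof.
  apply functional_extensionality. intro p. apply propositional_extensionality. tauto.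
Qed.

Section Fold_pair.
Variables (d g k t1 t2 s1 s2 e1 e2 : R).
Hypotheses (Ht : 0 < t1 < t2) (Ht2 : t2 <= 1) (He1 : 0 < e1) (He2 : 0 < e2).
Hypotheses (Hs1 : level g k s1 = Fexp d (ln t1)) (Hc1 : cos s1 = 0).
Hypotheses (Hs2 : level g k s2 = Fexp d (ln t2)) (Hc2 : cos s2 = 0).
Hypotheses (Hone1 : has_exactly_one (slice (Zset d g k) t1))
           (Hone2 : has_exactly_one (slice (Zset d g k) t2)).
Hypothesis (Htwo : forall tau, t1 < tau < t2 -> has_exactly_two (slice (Zset d g k) tau)).
Hypotheses (Hleft : forall tau, t1 - e1 < tau < t1 -> is_empty (slice (Zset d g k) tau))
           (Hright : forall tau, t2 < tau < t2 + e2 -> is_empty (slice (Zset d g k) tau)).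

Lemma fold_pair : supercritical d g k t1 s1 /\ subcritical d g k t2 s2.
Proof.
  pose proof (Rmin_l e1 (t2 - t1)). pose proof (Rmin_r e1 (t2 - t1)).
  pose proof (Rmin_l e2 (t2 - t1)). pose proof (Rmin_r e2 (t2 - t1)).
  split; (split; [apply fold_point_of_cos_0; auto; lra|]);
    exists (fun _ => True); rewrite True_and_pred; (split; [exact open3_True|split; [exact I|]]).
  - exists (Rmin e1 (t2 - t1)). split; [apply Rmin_pos; lra|].
    split; [|split; [exact Hone1|]]; intros tau Htau; [apply Htwo|apply Hleft]; lra.
  - exists (Rmin e2 (t2 - t1)). split; [apply Rmin_pos; lra|].
    split; [|split; [exact Hone2|]]; intros tau Htau; [apply Htwo|apply Hright]; lra.
Qed.

End Fold_pair.

(** * Closed curves in the cylinder *)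

Lemma continuity_scal_id (a : R) : continuity (fun t => a * t).
Proof. exact (continuity_scal id a (derivable_continuous _ derivable_id)). Qed.

Section Graph.
Variables (f l : R -> R) (a b : R).
Hypotheses (Hfc : continuity f) (Hfi : incr_on f a b) (Hab : a <= b).
Hypotheses (Hlc : continuity l) (Hlr : forall s, f a <= l s <= f b).
Hypothesis (Hlper : forall s s', cos s = cos s' -> sin s = sin s' -> l s = l s').

Definition graph_set (p : Rpt) : Prop :=
  exists x s, a <= x <= b /\ f x = l s /\ p = emb (exp x) s.

Definition graph_curve (t : R) : Rpt :=
  emb (exp (inv_on f a b (l (2 * PI * t)))) (2 * PI * t).

Lemma graph_curve_simple : simple_closed_param graph_curve graph_set.
Proof.
  pose proof PI_RGT_0.
  split; [|split; [|split]].
  - apply cont01_emb_exp.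
    + apply (continuous_within_comp I01 (fun L => f a <= L <= f b) (fun t => l (2 * PI * t))).
      * apply continuous_within_of_continuity.
        exact (continuity_comp (fun t => 2 * PI * t) l (continuity_scal_id _) Hlc).
      * intros. apply Hlr.
      * apply continuous_within_inv_on; auto.
    + apply continuous_within_of_continuity, continuity_scal_id.
  - unfold graph_curve. rewrite Rmult_0_r, Rmult_1_r.
    rewrite (Hlper 0 (2 * PI)) by (rewrite ?cos_0, ?cos_2PI, ?sin_0, ?sin_2PI; reflexivity).
    unfold emb. rewrite cos_0, sin_0, cos_2PI, sin_2PI. reflexivity.
  - intros t u Ht Hu E. unfold graph_curve, emb in E. injection E as _ Ec Es.
    destruct (cos_sin_inj_0_2PI (2 * PI * t) (2 * PI * u) Ec Es ltac:(nra) ltac:(nra))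
      as [A|[[A1 A2]|[A1 A2]]]; [left|right; left|right; right]; nra.
  - intro p. split.
    + intros [x [s [Hx [Hfl Hp]]]].
      assert (Hu : cos s ^ 2 + sin s ^ 2 = 1)
        by (pose proof (sin2_cos2 s); unfold Rsqr in *; lra).
      destruct (unit_circle_param (cos s) (sin s) Hu) as [s' [Hs' [E1 E2]]].
      exists (s' / (2 * PI)). split.
      { assert (0 < / (2 * PI)) by (apply Rinv_0_lt_compat; lra).
        split; [unfold Rdiv; nra|].
        apply (Rmult_le_reg_l (2 * PI)); [lra|].
        replace (2 * PI * (s' / (2 * PI))) with s' by (field; lra). lra. }
      unfold graph_curve. replace (2 * PI * (s' / (2 * PI))) with s' by (field; lra).
      rewrite <- (Hlper s s'), <- Hfl, (inv_on_unique f a b Hfi Hfc Hab (f x) x) by auto.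
      subst p. unfold emb. rewrite <- E1, <- E2. reflexivity.
    + intros [t [Ht Hp]]. subst p. exists (inv_on f a b (l (2 * PI * t))), (2 * PI * t).
      destruct (inv_on_spec f a b Hfc Hab (l (2 * PI * t)) (Hlr _)). auto.
Qed.

Lemma graph_curve_not_contractible : ~ contractible_in_C graph_curve.
Proof. apply winding_loop_not_contractible. intros. split; reflexivity. Qed.

End Graph.

Lemma continuous_within_glue_half (f1 f2 : R -> R) : continuous_within I01 f1 -> continuous_within I01 f2 -> f1 (1 / 2) = f2 (1 / 2) ->
  continuous_within I01 (fun t => if Rle_dec t (1 / 2) then f1 t else f2 t).
Proof.
  intros H1 H2 E t0 Ht0 e He.
  destruct (H1 t0 Ht0 e He) as [d1 [Hd1 P1]]. destruct (H2 t0 Ht0 e He) as [d2 [Hd2 P2]].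
  destruct (Rtotal_order t0 (1 / 2)) as [L|[L|L]].
  - exists (Rmin d1 (1 / 2 - t0)). pose proof (Rmin_l d1 (1 / 2 - t0)).
    pose proof (Rmin_r d1 (1 / 2 - t0)). split; [apply Rmin_pos; lra|].
    intros u Hu Hut. apply Rabs_def2 in Hut as Hut'.
    destruct (Rle_dec u (1 / 2)); [|lra]. destruct (Rle_dec t0 (1 / 2)); [|lra].
    apply P1; auto; lra.
  - subst t0. exists (Rmin d1 d2). pose proof (Rmin_l d1 d2). pose proof (Rmin_r d1 d2).
    split; [apply Rmin_pos; lra|]. intros u Hu Hut.
    destruct (Rle_dec (1 / 2) (1 / 2)); [|lra].
    destruct (Rle_dec u (1 / 2)); [apply P1|rewrite E; apply P2]; auto; lra.
  - exists (Rmin d2 (t0 - 1 / 2)). pose proof (Rmin_l d2 (t0 - 1 / 2)).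
    pose proof (Rmin_r d2 (t0 - 1 / 2)). split; [apply Rmin_pos; lra|].
    intros u Hu Hut. apply Rabs_def2 in Hut as Hut'.
    destruct (Rle_dec u (1 / 2)); [lra|]. destruct (Rle_dec t0 (1 / 2)); [lra|].
    apply P2; auto; lra.
Qed.

Lemma continuity_straight_line (x : R -> R) (x1 : R) (F : R -> R) :
  continuous_within I01 x -> continuity F -> forall t u, 0 <= t <= 1 -> 0 <= u <= 1 ->
  forall e, 0 < e -> exists dl, 0 < dl /\ forall t' u', 0 <= t' <= 1 -> 0 <= u' <= 1 ->
    Rabs (t' - t) < dl -> Rabs (u' - u) < dl ->
    Rabs (F ((1 - u') * x t' + u' * x1) - F ((1 - u) * x t + u * x1)) < e.
Proof.
  intros Hx HF t u Ht Hu e He.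
  set (y0 := (1 - u) * x t + u * x1).
  destruct (continuity_pt_eps F y0 (HF y0) e He) as [eta [Heta P]].
  destruct (Hx t Ht (eta / 2) ltac:(lra)) as [d1 [Hd1 P1]].
  set (K := Rabs (x t - x1) + 1).
  assert (HK : 0 < K) by (unfold K; pose proof (Rabs_pos (x t - x1)); lra).
  exists (Rmin d1 (eta / (2 * K))). split; [apply Rmin_pos; auto; apply Rdiv_lt_0_compat; lra|].
  intros t' u' Ht' Hu' Htt Huu. apply P.
  pose proof (Rmin_l d1 (eta / (2 * K))). pose proof (Rmin_r d1 (eta / (2 * K))).
  replace ((1 - u') * x t' + u' * x1 - y0)
    with ((1 - u') * (x t' - x t) + (u - u') * (x t - x1)) by (unfold y0; ring).
  eapply Rle_lt_trans; [apply Rabs_triang|]. rewrite !Rabs_mult.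
  assert (Rabs (1 - u') <= 1) by (rewrite Rabs_right; lra).
  assert (Rabs (x t' - x t) < eta / 2) by (apply P1; auto; lra).
  assert (Rabs (u - u') < eta / (2 * K)) by (rewrite Rabs_minus_sym; lra).
  assert (Rabs (x t - x1) <= K) by (unfold K; lra).
  assert (Rabs (u - u') * Rabs (x t - x1) <= eta / (2 * K) * K)
    by (apply Rmult_le_compat; try apply Rabs_pos; lra).
  assert (eta / (2 * K) * K = eta / 2) by (field; lra).
  pose proof (Rabs_pos (1 - u')). pose proof (Rabs_pos (x t' - x t)). nra.
Qed.

(* The straight-line homotopy of the lift (x, s) to the strip x <= 0 contracts the loop. *)
Lemma lifted_loop_contractible (x s : R -> R) (x1 s1 : R) :
  continuous_within I01 x -> continuous_within I01 s -> (forall t, 0 <= t <= 1 -> x t <= 0) -> x1 <= 0 ->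
  x 0 = x 1 -> s 0 = s 1 -> contractible_in_C (fun t => emb (exp (x t)) (s t)).
Proof.
  intros Hx Hs Hneg Hx1 E0 E1.
  exists (fun t u => emb (exp ((1 - u) * x t + u * x1)) ((1 - u) * s t + u * s1)).
  split; [|split; [|split; [|split]]].
  - intros t u Ht Hu e He.
    destruct (continuity_straight_line x x1 exp Hx (derivable_continuous _ derivable_exp)
      t u Ht Hu e He) as [d1 [Hd1 P1]].
    destruct (continuity_straight_line s s1 cos Hs continuity_cos t u Ht Hu e He)
      as [d2 [Hd2 P2]].
    destruct (continuity_straight_line s s1 sin Hs continuity_sin t u Ht Hu e He)
      as [d3 [Hd3 P3]].
    exists (Rmin d1 (Rmin d2 d3)). split; [repeat apply Rmin_pos; auto|].
    intros t' u' Ht' Hu' Htt Huu.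
    pose proof (Rmin_l d1 (Rmin d2 d3)). pose proof (Rmin_r d1 (Rmin d2 d3)).
    pose proof (Rmin_l d2 d3). pose proof (Rmin_r d2 d3).
    unfold emb. apply dist3_lt_coords; simpl; [apply P1|apply P2|apply P3]; auto; lra.
  - intros t u Ht Hu. exists (exp ((1 - u) * x t + u * x1)), ((1 - u) * s t + u * s1).
    split; auto. split; [apply exp_pos|]. apply exp_le_1_iff.
    pose proof (Hneg t Ht). nra.
  - intros t Ht. f_equal; [f_equal|]; ring.
  - exists (emb (exp x1) s1). intros t Ht. repeat f_equal; ring.
  - intros u Hu. rewrite E0, E1. reflexivity.
Qed.

(** * The loop over an arc of the circle *)

Lemma sin_3PI_2_plus th : sin (3 * PI / 2 + th) = - cos th.
Proof. rewrite sin_plus, cos_3PI_2, sin_3PI_2. ring. Qed.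

Lemma cos_Rabs th : cos (Rabs th) = cos th.
Proof.
  destruct (Rle_dec 0 th); [rewrite Rabs_pos_eq|rewrite Rabs_left, cos_neg]; auto; lra.
Qed.

Lemma circle_point_around_3PI_2 s : exists th, - PI <= th <= PI /\
  cos (3 * PI / 2 + th) = cos s /\ sin (3 * PI / 2 + th) = sin s.
Proof.
  pose proof PI_RGT_0.
  assert (Hu : cos s ^ 2 + sin s ^ 2 = 1) by (pose proof (sin2_cos2 s); unfold Rsqr in *; lra).
  destruct (unit_circle_param (cos s) (sin s) Hu) as [s0 [Hs0 [E1 E2]]].
  destruct (Rlt_dec (s0 - 3 * PI / 2) (- PI)).
  - exists (s0 + 2 * PI - 3 * PI / 2).
    replace (3 * PI / 2 + (s0 + 2 * PI - 3 * PI / 2)) with (s0 + 2 * PI) by ring.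
    rewrite cos_plus, sin_plus, cos_2PI, sin_2PI. split; [lra|]. split; lra.
  - exists (s0 - 3 * PI / 2). replace (3 * PI / 2 + (s0 - 3 * PI / 2)) with s0 by ring. lra.
Qed.

Lemma Rabs_le_bounds x a : Rabs x <= a -> - a <= x <= a.
Proof. intros. destruct (Rle_dec 0 x); [rewrite Rabs_pos_eq in H|rewrite Rabs_left in H]; lra. Qed.

Section Arc.
Variables (d g k x1 x2 : R).
Hypotheses (hd : 1 < d) (hdP : d < Phi) (hg : 0 < g) (hk : 0 < k < 1).
Let M := Fexp d (xc d).
Hypotheses (hM1 : g * (1 - k) < M) (hM2 : M < g * (1 + k)).
Hypotheses (Hx1 : x1 < xc d) (Hx2 : xc d < x2 <= 0).
Hypotheses (E1 : Fexp d x1 = g * (1 - k)) (E2 : Fexp d x2 = g * (1 - k)).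

(* [level s = M] exactly when [sin s = w]; the zero set lies over the arc
   [sin s <= w], i.e. [3 PI / 2 + th] with [|th| <= sigma]. *)
Let w := (M / g - 1) / k.
Let sigma := acos (- w).

Lemma w_bounds : -1 < w < 1.
Proof. unfold w. split; apply (Rmult_lt_reg_l (g * k)); try nra; field_simplify; nra. Qed.

Lemma M_eq_level_w : M = g * (1 + k * w).
Proof. unfold w. field. lra. Qed.

Lemma sigma_bounds : 0 < sigma < PI.
Proof. apply acos_bound_lt. pose proof w_bounds. lra. Qed.

Lemma cos_sigma : cos sigma = - w.
Proof. apply cos_acos. pose proof w_bounds. lra. Qed.

Lemma arc_sin_le_iff th : Rabs th <= PI ->
  (sin (3 * PI / 2 + th) <= w <-> Rabs th <= sigma) /\
  (sin (3 * PI / 2 + th) = w <-> Rabs th = sigma).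
Proof.
  intros Hth. rewrite sin_3PI_2_plus, <- cos_Rabs. pose proof sigma_bounds.
  pose proof (Rabs_pos th). pose proof cos_sigma.
  assert (Hdec : forall x y, 0 <= x <= PI -> 0 <= y <= PI -> x < y -> cos y < cos x)
    by (intros; apply cos_decreasing_1; lra).
  split; split; intro Hs.
  - destruct (Rle_dec (Rabs th) sigma); auto. pose proof (Hdec sigma (Rabs th)). lra.
  - destruct (Req_dec (Rabs th) sigma) as [E|E]; [rewrite E; lra|].
    pose proof (Hdec (Rabs th) sigma). lra.
  - apply cos_inj; lra.
  - rewrite Hs. lra.
Qed.

Definition arc_angle (t : R) : R := sigma * (1 - 2 * Rabs (1 - 2 * t)).

Lemma arc_angle_bound t : 0 <= t <= 1 -> Rabs (arc_angle t) <= sigma.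
Proof.
  intros. pose proof sigma_bounds. unfold arc_angle. apply Rabs_le.
  assert (0 <= Rabs (1 - 2 * t) <= 1) by (split; [apply Rabs_pos|apply Rabs_le; lra]). nra.
Qed.

Lemma arc_angle_cont : continuous_within I01 arc_angle.
Proof.
  intros t Ht e He. pose proof sigma_bounds.
  exists (e / (4 * sigma)). split; [apply Rdiv_lt_0_compat; lra|].
  intros u Hu Hut. unfold arc_angle.
  replace (sigma * (1 - 2 * Rabs (1 - 2 * u)) - sigma * (1 - 2 * Rabs (1 - 2 * t)))
    with ((2 * sigma) * (Rabs (1 - 2 * t) - Rabs (1 - 2 * u))) by ring.
  rewrite Rabs_mult, (Rabs_pos_eq (2 * sigma)) by lra.
  pose proof (Rabs_triang_inv2 (1 - 2 * t) (1 - 2 * u)) as Htri.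
  replace (1 - 2 * t - (1 - 2 * u)) with (2 * (u - t)) in Htri by ring.
  rewrite Rabs_mult, (Rabs_pos_eq 2) in Htri by lra.
  apply (Rle_lt_trans _ (2 * sigma * (2 * Rabs (u - t)))); [nra|].
  replace e with (4 * sigma * (e / (4 * sigma))) by (field; lra). nra.
Qed.

Lemma level_arc_range t : 0 <= t <= 1 ->
  g * (1 - k) <= level g k (3 * PI / 2 + arc_angle t) <= M.
Proof.
  intros Ht. pose proof (level_range g k (3 * PI / 2 + arc_angle t) hg ltac:(lra)).
  split; [lra|]. pose proof sigma_bounds. pose proof (arc_angle_bound t Ht).
  assert (sin (3 * PI / 2 + arc_angle t) <= w) by (apply arc_sin_le_iff; lra).
  rewrite M_eq_level_w. unfold level. nra.
Qed.

Lemma level_eq_M_iff s : level g k s = M <-> sin s = w.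
Proof. rewrite M_eq_level_w. apply level_eq_iff; lra. Qed.

Definition arc_left (t : R) : R :=
  inv_on (Fexp d) x1 (xc d) (level g k (3 * PI / 2 + arc_angle t)).
Definition arc_right (t : R) : R :=
  inv_on (fun x => - Fexp d x) (xc d) x2 (- level g k (3 * PI / 2 + arc_angle t)).

Lemma incr_on_left : incr_on (Fexp d) x1 (xc d).
Proof. intros x y Hx Hxy Hy. apply Fexp_increasing; auto. Qed.

Lemma incr_on_right : incr_on (fun x => - Fexp d x) (xc d) x2.
Proof. intros x y Hx Hxy Hy. pose proof (Fexp_decreasing d hd hdP x y Hx Hxy). lra. Qed.

Lemma continuity_opp_Fexp : continuity (fun x => - Fexp d x).
Proof. apply (continuity_opp (Fexp d)), continuity_Fexp. Qed.

Lemma arc_left_spec t : 0 <= t <= 1 ->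
  x1 <= arc_left t <= xc d /\ Fexp d (arc_left t) = level g k (3 * PI / 2 + arc_angle t).
Proof.
  intros. apply inv_on_spec; [apply continuity_Fexp|lra|]. rewrite E1. apply level_arc_range; auto.
Qed.

Lemma arc_right_spec t : 0 <= t <= 1 ->
  xc d <= arc_right t <= x2 /\ Fexp d (arc_right t) = level g k (3 * PI / 2 + arc_angle t).
Proof.
  intros. destruct (inv_on_spec (fun x => - Fexp d x) (xc d) x2 continuity_opp_Fexp
    ltac:(lra) (- level g k (3 * PI / 2 + arc_angle t))) as [H1 H2].
  - rewrite E2. pose proof (level_arc_range t H). fold M. lra.
  - split; [exact H1|]. unfold arc_right. lra.
Qed.

Lemma contw_level_arc : continuous_within I01 (fun t => level g k (3 * PI / 2 + arc_angle t)).
Proof.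
  apply continuous_within_comp_continuity; [|apply continuity_level].
  apply (continuous_within_comp_continuity I01 arc_angle (fun th => 3 * PI / 2 + th)); [exact arc_angle_cont|].
  apply continuity_plus; [apply continuity_const; intros ? ?; reflexivity|].
  exact (derivable_continuous _ derivable_id).
Qed.

Lemma arc_left_cont : continuous_within I01 arc_left.
Proof.
  apply (continuous_within_comp I01 (fun L => Fexp d x1 <= L <= Fexp d (xc d)) _ _ contw_level_arc).
  - intros t Ht. rewrite E1. apply level_arc_range; auto.
  - apply continuous_within_inv_on; [exact incr_on_left|apply continuity_Fexp|lra].
Qed.

Lemma arc_right_cont : continuous_within I01 arc_right.
Proof.
  apply (continuous_within_comp I01 (fun L => - Fexp d (xc d) <= L <= - Fexp d x2)
    (fun t => - level g k (3 * PI / 2 + arc_angle t))).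
  - apply continuous_within_comp_continuity; [exact contw_level_arc|apply continuity_opp].
    exact (derivable_continuous _ derivable_id).
  - intros t Ht. rewrite E2. pose proof (level_arc_range t Ht). fold M. lra.
  - exact (continuous_within_inv_on (fun x => - Fexp d x) (xc d) x2 incr_on_right continuity_opp_Fexp
      ltac:(lra)).
Qed.

Lemma arc_branches_at_max t : 0 <= t <= 1 -> Rabs (arc_angle t) = sigma ->
  arc_left t = xc d /\ arc_right t = xc d.
Proof.
  intros Ht Hth. pose proof sigma_bounds.
  assert (Hl : level g k (3 * PI / 2 + arc_angle t) = M).
  { apply level_eq_M_iff, arc_sin_le_iff; lra. }
  split.
  - unfold arc_left. rewrite Hl. apply inv_on_unique; auto using incr_on_left, continuity_Fexp; lra.
  - unfold arc_right. rewrite Hl.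
    apply (inv_on_unique (fun x => - Fexp d x)); auto using incr_on_right, continuity_opp_Fexp; lra.
Qed.

Lemma arc_angle_at t : t = 0 \/ t = 1 / 2 \/ t = 1 -> Rabs (arc_angle t) = sigma.
Proof.
  pose proof sigma_bounds. unfold arc_angle.
  intros [E|[E|E]]; subst t; [rewrite Rabs_pos_eq with (x := 1 - 2 * 0)
    |rewrite Rabs_pos_eq with (x := 1 - 2 * (1 / 2))|rewrite Rabs_left with (r := 1 - 2 * 1)];
    try lra; [replace (sigma * (1 - 2 * (1 - 2 * 0))) with (- sigma) by ring
    |replace (sigma * (1 - 2 * (1 - 2 * (1 / 2)))) with sigma by field
    |replace (sigma * (1 - 2 * - (1 - 2 * 1))) with (- sigma) by ring];
    [rewrite Rabs_Ropp| |rewrite Rabs_Ropp]; apply Rabs_pos_eq; lra.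
Qed.

Definition arc_x (t : R) : R := if Rle_dec t (1 / 2) then arc_left t else arc_right t.
Definition arc_curve (t : R) : Rpt := emb (exp (arc_x t)) (3 * PI / 2 + arc_angle t).

Lemma arc_x_spec t : 0 <= t <= 1 -> x1 <= arc_x t <= x2 /\
  Fexp d (arc_x t) = level g k (3 * PI / 2 + arc_angle t).
Proof.
  intros Ht. unfold arc_x. destruct (Rle_dec t (1 / 2)).
  - destruct (arc_left_spec t Ht). split; [lra|auto].
  - destruct (arc_right_spec t Ht). split; [lra|auto].
Qed.

Lemma arc_x_cont : continuous_within I01 arc_x.
Proof.
  apply continuous_within_glue_half; [exact arc_left_cont|exact arc_right_cont|].
  destruct (arc_branches_at_max (1 / 2)) as [-> ->]; auto; [lra|].
  apply arc_angle_at. auto.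
Qed.

Lemma arc_x_ends : arc_x 0 = xc d /\ arc_x 1 = xc d.
Proof.
  unfold arc_x. destruct (Rle_dec 0 (1 / 2)); [|lra]. destruct (Rle_dec 1 (1 / 2)); [lra|].
  split; [apply (arc_branches_at_max 0)|apply (arc_branches_at_max 1)];
    try lra; apply arc_angle_at; auto.
Qed.

Lemma arc_angle_ends : arc_angle 0 = arc_angle 1.
Proof. unfold arc_angle. rewrite Rabs_pos_eq, Rabs_left; lra. Qed.

Lemma arc_curve_contractible : contractible_in_C arc_curve.
Proof.
  destruct arc_x_ends as [A0 A1].
  apply (lifted_loop_contractible arc_x (fun t => 3 * PI / 2 + arc_angle t) (xc d) 0).
  - exact arc_x_cont.
  - apply (continuous_within_comp_continuity I01 arc_angle (fun th => 3 * PI / 2 + th)); [exact arc_angle_cont|].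
    apply continuity_plus; [apply continuity_const; intros ? ?; reflexivity|].
    exact (derivable_continuous _ derivable_id).
  - intros t Ht. pose proof (arc_x_spec t Ht). lra.
  - pose proof (xc_neg d hd hdP). lra.
  - congruence.
  - rewrite arc_angle_ends. reflexivity.
Qed.

Lemma arc_x_max t : 0 <= t <= 1 -> arc_x t = xc d -> Rabs (arc_angle t) = sigma.
Proof.
  intros Ht Ex. pose proof sigma_bounds. pose proof (arc_angle_bound t Ht).
  destruct (arc_x_spec t Ht) as [_ HF]. rewrite Ex in HF. fold M in HF.
  apply arc_sin_le_iff; [lra|]. apply level_eq_M_iff. auto.
Qed.

Lemma arc_angle_eq_sigma t : 0 <= t <= 1 -> Rabs (arc_angle t) = sigma ->
  t = 0 \/ t = 1 / 2 \/ t = 1.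
Proof.
  intros Ht E. pose proof sigma_bounds. unfold arc_angle in E.
  rewrite Rabs_mult, (Rabs_pos_eq sigma) in E by lra.
  assert (E' : Rabs (1 - 2 * Rabs (1 - 2 * t)) = 1) by (apply (Rmult_eq_reg_l sigma); lra).
  destruct (Rle_dec 0 (1 - 2 * t));
    [rewrite (Rabs_pos_eq (1 - 2 * t)) in E' by lra|rewrite (Rabs_left (1 - 2 * t)) in E' by lra];
    match type of E' with Rabs ?y = 1 =>
      destruct (Rle_dec 0 y); [rewrite Rabs_pos_eq in E'|rewrite Rabs_left in E'] end; lra.
Qed.

(* The branches share only the critical point, reached where the level is [M]: at the ends
   of the arc. *)
Lemma arc_branches_meet_at_ends t u : 0 <= t < 1 / 2 -> 1 / 2 < u <= 1 -> arc_x t = arc_x u ->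
  t = 0.
Proof.
  intros Ht Hu Ex. unfold arc_x in Ex.
  destruct (Rle_dec t (1 / 2)); [|lra]. destruct (Rle_dec u (1 / 2)); [lra|].
  destruct (arc_left_spec t ltac:(lra)). destruct (arc_right_spec u ltac:(lra)).
  assert (Hxc : arc_x t = xc d) by (unfold arc_x; destruct (Rle_dec t (1 / 2)); lra).
  destruct (arc_angle_eq_sigma t ltac:(lra) (arc_x_max t ltac:(lra) Hxc)) as [|[|]]; lra.
Qed.

Lemma arc_curve_inj t u : 0 <= t <= 1 -> 0 <= u <= 1 -> arc_curve t = arc_curve u ->
  t = u \/ (t = 0 /\ u = 1) \/ (t = 1 /\ u = 0).
Proof.
  intros Ht Hu E. unfold arc_curve, emb in E. injection E as Ex Ec Es. apply exp_inv in Ex.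
  pose proof sigma_bounds.
  pose proof (arc_angle_bound t Ht). pose proof (arc_angle_bound u Hu).
  assert (Eth : arc_angle t = arc_angle u).
  { apply (Rplus_eq_reg_l (3 * PI / 2)), cos_sin_inj_lt_2PI; auto.
    replace (3 * PI / 2 + arc_angle t - (3 * PI / 2 + arc_angle u))
      with (arc_angle t - arc_angle u) by ring.
    eapply Rle_lt_trans; [apply Rabs_triang|]. rewrite Rabs_Ropp. lra. }
  unfold arc_angle in Eth.
  assert (Ea : Rabs (1 - 2 * t) = Rabs (1 - 2 * u)) by (apply (Rmult_eq_reg_l (2 * sigma)); lra).
  destruct (Rle_dec 0 (1 - 2 * t)); destruct (Rle_dec 0 (1 - 2 * u));
    [rewrite (Rabs_pos_eq (1 - 2 * t)), (Rabs_pos_eq (1 - 2 * u)) in Ea by lra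
    |rewrite (Rabs_pos_eq (1 - 2 * t)), (Rabs_left (1 - 2 * u)) in Ea by lra
    |rewrite (Rabs_left (1 - 2 * t)), (Rabs_pos_eq (1 - 2 * u)) in Ea by lra
    |rewrite (Rabs_left (1 - 2 * t)), (Rabs_left (1 - 2 * u)) in Ea by lra].
  - left; lra.
  - destruct (Req_dec t (1 / 2)); [left; lra|]. right; left.
    pose proof (arc_branches_meet_at_ends t u ltac:(lra) ltac:(lra) Ex). lra.
  - destruct (Req_dec u (1 / 2)); [left; lra|]. right; right.
    pose proof (arc_branches_meet_at_ends u t ltac:(lra) ltac:(lra) (eq_sym Ex)). lra.
  - left; lra.
Qed.

Lemma arc_angle_left th : Rabs th <= sigma ->
  0 <= (1 + th / sigma) / 4 <= 1 / 2 /\ arc_angle ((1 + th / sigma) / 4) = th.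
Proof.
  intros Hth. apply Rabs_le_bounds in Hth. pose proof sigma_bounds.
  assert (-1 <= th / sigma <= 1)
    by (split; apply (Rmult_le_reg_r sigma); try lra; unfold Rdiv; rewrite Rmult_assoc, Rinv_l; lra).
  split; [lra|]. unfold arc_angle. rewrite Rabs_pos_eq by lra. field. lra.
Qed.

Lemma arc_angle_right th : - sigma <= th < sigma ->
  1 / 2 < (3 - th / sigma) / 4 <= 1 /\ arc_angle ((3 - th / sigma) / 4) = th.
Proof.
  intros Hth. pose proof sigma_bounds.
  assert (-1 <= th / sigma < 1) by (split; [apply (Rmult_le_reg_r sigma)|apply (Rmult_lt_reg_r sigma)];
    try lra; unfold Rdiv; rewrite Rmult_assoc, Rinv_l; lra).
  split; [lra|]. unfold arc_angle. rewrite Rabs_left1 by lra. field. lra.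
Qed.

Lemma arc_curve_onto x s : x <= 0 -> level g k s = Fexp d x ->
  exists t, 0 <= t <= 1 /\ emb (exp x) s = arc_curve t.
Proof.
  intros Hx0 Hs. pose proof sigma_bounds. pose proof PI_RGT_0.
  destruct (circle_point_around_3PI_2 s) as [th [Hth [Ec Es]]].
  assert (Hlev : level g k (3 * PI / 2 + th) = Fexp d x) by (unfold level in *; rewrite Es; auto).
  assert (Hin : Rabs th <= sigma).
  { apply arc_sin_le_iff; [apply Rabs_le; lra|]. rewrite Es.
    pose proof (Fexp_le_max d hd hdP x) as Hmax. fold M in Hmax.
    rewrite <- Hs, M_eq_level_w in Hmax. unfold level in Hmax. nra. }
  assert (HF1 : g * (1 - k) <= Fexp d x) by (rewrite <- Hs; apply level_range; lra).
  assert (Hxe : emb (exp x) s = emb (exp x) (3 * PI / 2 + th)) by (unfold emb; rewrite Ec, Es; auto).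
  rewrite Hxe. unfold arc_curve, arc_x.
  destruct (Rle_dec x (xc d)) as [Hxc|Hxc].
  - assert (x1 <= x).
    { destruct (Rle_dec x1 x); auto. pose proof (Fexp_increasing d hd hdP x x1). lra. }
    destruct (arc_angle_left th Hin) as [Ht Eth]. exists ((1 + th / sigma) / 4). split; [lra|].
    destruct (Rle_dec ((1 + th / sigma) / 4) (1 / 2)); [|lra]. unfold arc_left. rewrite !Eth.
    rewrite Hlev, (inv_on_unique (Fexp d) x1 (xc d) incr_on_left (continuity_Fexp d)
      ltac:(lra) (Fexp d x) x) by (auto; lra).
    reflexivity.
  - assert (x <= x2).
    { destruct (Rle_dec x x2); auto. pose proof (Fexp_decreasing d hd hdP x2 x). lra. }
    assert (th < sigma).
    { destruct (Rlt_dec th sigma) as [|Hge]; [assumption|].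
      assert (Habs : Rabs th = sigma) by (apply Rabs_le_bounds in Hin; rewrite Rabs_pos_eq; lra).
      apply (arc_sin_le_iff th ltac:(apply Rabs_le; lra)), level_eq_M_iff in Habs.
      pose proof (Fexp_decreasing d hd hdP (xc d) x) as Hdec. fold M in Hdec. lra. }
    destruct (arc_angle_right th ltac:(apply Rabs_le_bounds in Hin; lra)) as [Ht Eth].
    exists ((3 - th / sigma) / 4). split; [lra|].
    destruct (Rle_dec ((3 - th / sigma) / 4) (1 / 2)); [lra|]. unfold arc_right. rewrite !Eth.
    rewrite Hlev, (inv_on_unique (fun x => - Fexp d x) (xc d) x2 incr_on_right
      continuity_opp_Fexp ltac:(lra) (- Fexp d x) x) by (auto; lra).
    reflexivity.
Qed.

Lemma arc_curve_simple : simple_closed_param arc_curve (Zset d g k).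
Proof.
  destruct arc_x_ends as [A0 A1].
  split; [|split; [|split]].
  - apply cont01_emb_exp; [exact arc_x_cont|].
    apply (continuous_within_comp_continuity I01 arc_angle (fun th => 3 * PI / 2 + th)); [exact arc_angle_cont|].
    apply continuity_plus; [apply continuity_const; intros ? ?; reflexivity|].
    exact (derivable_continuous _ derivable_id).
  - unfold arc_curve. rewrite A0, A1, arc_angle_ends. reflexivity.
  - exact arc_curve_inj.
  - intro p. rewrite Zset_log. split.
    + intros [x [s [Hx [Hs Hp]]]]. subst p. apply arc_curve_onto; auto.
    + intros [t [Ht Hp]]. subst p. destruct (arc_x_spec t Ht).
      exists (arc_x t), (3 * PI / 2 + arc_angle t). repeat split; auto; lra.
Qed.

End Arc.

(** * Crossings of the band [[gamma (1 - k), gamma (1 + k)]] *)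

Lemma exists_between (f : R -> R) (a b L : R) : continuity f -> a < b ->
  f a < L < f b \/ f b < L < f a -> exists x, a < x < b /\ f x = L.
Proof.
  intros Hc Hab HL.
  assert (Hcont : continuity (fun x => f x - L))
    by (apply continuity_minus; auto; apply continuity_const; intros ? ?; reflexivity).
  destruct HL as [HL|HL].
  - destruct (IVT_cor (fun x => f x - L) a b Hcont ltac:(lra) ltac:(nra)) as [x [Hx Ex]].
    exists x. split; [|lra]. destruct Hx as [[Hx|Hx] [Hx'|Hx']]; subst; split; lra.
  - destruct (IVT_cor (fun x => f x - L) a b Hcont ltac:(lra) ltac:(nra)) as [x [Hx Ex]].
    exists x. split; [|lra]. destruct Hx as [[Hx|Hx] [Hx'|Hx']]; subst; split; lra.
Qed.

Section Below_Phi.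
Variable d : R.
Hypotheses (hd : 1 < d) (hdP : d < Phi).
Let M := Fexp d (xc d).

Lemma Fexp_crossing_left L : 0 < L < M -> exists x, x < xc d /\ Fexp d x = L.
Proof.
  intros HL. set (a := Rmin (xc d - 1) (ln L / pdelta d)).
  assert (Ha : a < xc d) by (pose proof (Rmin_l (xc d - 1) (ln L / pdelta d)); unfold a; lra).
  pose proof (Fexp_lt_far_left d hd hdP L a ltac:(lra) (Rmin_r _ _)).
  destruct (exists_between (Fexp d) a (xc d) L (continuity_Fexp d) Ha ltac:(fold M; lra))
    as [x [Hx Ex]].
  exists x. split; [lra|exact Ex].
Qed.

Lemma Fexp_crossing_right L : 0 < L < M -> exists x, xc d < x < 0 /\ Fexp d x = L.
Proof.
  intros HL. apply exists_between; [apply continuity_Fexp|apply xc_neg; auto|].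
  rewrite Fexp_0. fold M. lra.
Qed.

Lemma Fexp_above_between x1 x2 L : x1 <= xc d <= x2 -> Fexp d x1 = L -> Fexp d x2 = L ->
  forall x, (x1 < x < x2 -> L < Fexp d x) /\ (x < x1 \/ x2 < x -> Fexp d x < L).
Proof.
  intros Hx E1 E2 x. split.
  - intros Hx'. destruct (Rle_dec x (xc d)).
    + rewrite <- E1. apply Fexp_increasing; auto; lra.
    + rewrite <- E2. apply Fexp_decreasing; auto; lra.
  - intros [Hx'|Hx'].
    + rewrite <- E1. apply Fexp_increasing; auto; lra.
    + rewrite <- E2. apply Fexp_decreasing; auto; lra.
Qed.

Lemma Fexp_increasing_inv x y : x <= xc d -> y <= xc d -> Fexp d x < Fexp d y -> x < y.
Proof.
  intros. destruct (Rlt_dec x y); auto. destruct (Req_dec x y) as [->|]; [lra|].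
  pose proof (Fexp_increasing d hd hdP y x). lra.
Qed.

Lemma Fexp_decreasing_inv x y : xc d <= x -> xc d <= y -> Fexp d y < Fexp d x -> x < y.
Proof.
  intros. destruct (Rlt_dec x y); auto. destruct (Req_dec x y) as [->|]; [lra|].
  pose proof (Fexp_decreasing d hd hdP y x). lra.
Qed.

End Below_Phi.

Lemma Fexp_crossing_beyond d L : 1 < d -> Phi < d -> 0 < L -> exists x, x < 0 /\ Fexp d x = L.
Proof.
  intros hd hdP HL. destruct (Fexp_gt_far_left d hd hdP L HL) as [a [Ha HFa]].
  destruct (exists_between (Fexp d) a 0 L (continuity_Fexp d) Ha ltac:(rewrite Fexp_0; lra))
    as [x [Hx Ex]].
  exists x. split; [lra|exact Ex].
Qed.

Lemma exp_le_le_iff x1 x2 tau : 0 < tau ->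
  (exp x1 <= tau <= exp x2 <-> x1 <= ln tau <= x2).
Proof.
  intros Ht. rewrite <- (exp_ln tau) at 1 2 by lra.
  assert (Hle : forall a b, exp a <= exp b <-> a <= b).
  { intros a b. split; intro H.
    - destruct (Rle_dec a b); auto. pose proof (exp_increasing b a ltac:(lra)). lra.
    - destruct (Req_dec a b) as [->|]; [lra|]. left. apply exp_increasing. lra. }
  rewrite !Hle. tauto.
Qed.

Lemma exp_lt_lt_iff x1 x2 tau : 0 < tau ->
  (exp x1 < tau < exp x2 <-> x1 < ln tau < x2).
Proof.
  intros Ht. rewrite <- (exp_ln tau) at 1 2 by lra.
  assert (Hlt : forall a b, exp a < exp b <-> a < b) by (split; [apply exp_lt_inv|apply exp_increasing]).
  rewrite !Hlt. tauto.
Qed.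

Section Band_slices.
Variables (d g k : R).
Hypotheses (hg : 0 < g) (hk : 0 < k < 1).

Lemma slices_two_on x1 x2 : x2 <= 0 ->
  (forall x, x1 < x < x2 -> g * (1 - k) < Fexp d x < g * (1 + k)) ->
  forall tau, exp x1 < tau < exp x2 -> has_exactly_two (slice (Zset d g k) tau).
Proof.
  intros Hx2 Hband tau Ht. pose proof (exp_pos x1).
  apply slice_two; auto.
  - split; [lra|]. apply Rlt_le, (Rlt_le_trans _ (exp x2)); [lra|]. apply exp_le_1_iff. lra.
  - apply Hband, exp_lt_lt_iff; lra.
Qed.

Lemma slices_empty_off (P : R -> Prop) :
  (forall x, x <= 0 -> ~ P x -> Fexp d x < g * (1 - k) \/ g * (1 + k) < Fexp d x) ->
  forall tau, (0 < tau -> ~ P (ln tau)) -> is_empty (slice (Zset d g k) tau).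
Proof.
  intros Hout tau HP. apply slice_empty; auto. intros Ht. apply Hout; [|apply HP; lra].
  rewrite <- exp_le_1_iff, exp_ln; lra.
Qed.

Lemma slice_bottom_exp x : x <= 0 -> Fexp d x = g * (1 - k) ->
  is_singleton (slice (Zset d g k) (exp x)) (emb (exp x) (3 * PI / 2)).
Proof.
  intros. apply slice_bottom; auto; [|rewrite ln_exp; auto].
  split; [apply exp_pos|apply exp_le_1_iff; auto].
Qed.

Lemma slice_top_exp x : x <= 0 -> Fexp d x = g * (1 + k) ->
  is_singleton (slice (Zset d g k) (exp x)) (emb (exp x) (PI / 2)).
Proof.
  intros. apply slice_top; auto; [|rewrite ln_exp; auto].
  split; [apply exp_pos|apply exp_le_1_iff; auto].
Qed.

End Band_slices.

Lemma Rdiv_lt_iff a b c : 0 < c -> (a / c < b <-> a < b * c).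
Proof.
  intros Hc. split; intro H.
  - apply (Rmult_lt_compat_r c) in H; auto. unfold Rdiv in H. rewrite Rmult_assoc, Rinv_l in H; lra.
  - apply (Rmult_lt_reg_r c); auto. unfold Rdiv. rewrite Rmult_assoc, Rinv_l; lra.
Qed.

Lemma lt_Rdiv_iff a b c : 0 < c -> (b < a / c <-> b * c < a).
Proof.
  intros Hc. split; intro H.
  - apply (Rmult_lt_compat_r c) in H; auto. unfold Rdiv in H. rewrite Rmult_assoc, Rinv_l in H; lra.
  - apply (Rmult_lt_reg_r c); auto. unfold Rdiv. rewrite Rmult_assoc, Rinv_l; lra.
Qed.

(** * The four regimes *)

Lemma Zset_empty_above_band k g d M : 0 < k < 1 -> 0 < g -> is_max_F d M ->
  g > M / (1 - k) -> is_empty (Zset d g k).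
Proof.
  intros hk hg [_ Hmax] Hg p Hp. apply Zset_log in Hp as [x [s [Hx [Hs _]]]].
  apply Rgt_lt, Rdiv_lt_iff in Hg; [|lra].
  pose proof (level_range g k s hg ltac:(lra)).
  pose proof (Hmax (exp x) (conj (exp_pos x) (proj2 (exp_le_1_iff x) Hx))) as HM.
  rewrite Ffun_Fexp, ln_exp in HM. lra.
Qed.

Definition Zset_one_contractible_loop (d g k : R) : Prop :=
  exists tau1 tau2, 0 < tau1 < tau2 /\ tau2 < 1 /\
    (forall tau, tau1 < tau < tau2 -> has_exactly_two (slice (Zset d g k) tau)) /\
    is_singleton (slice (Zset d g k) tau1) (emb tau1 (3 * PI / 2)) /\
    is_singleton (slice (Zset d g k) tau2) (emb tau2 (3 * PI / 2)) /\
    (forall tau, ~ (tau1 <= tau <= tau2) -> is_empty (slice (Zset d g k) tau)) /\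
    supercritical d g k tau1 (3 * PI / 2) /\
    subcritical d g k tau2 (3 * PI / 2) /\
    exists c, simple_closed_param c (Zset d g k) /\ contractible_in_C c.

Definition Zset_two_noncontractible_loops (d g k : R) : Prop :=
  exists a1 a2 a3 a4, 0 < a1 < a2 /\ a2 < a3 < a4 /\ a4 < 1 /\
    (forall tau, (a1 < tau < a2 \/ a3 < tau < a4) -> has_exactly_two (slice (Zset d g k) tau)) /\
    is_singleton (slice (Zset d g k) a1) (emb a1 (3 * PI / 2)) /\
    is_singleton (slice (Zset d g k) a2) (emb a2 (PI / 2)) /\
    is_singleton (slice (Zset d g k) a3) (emb a3 (PI / 2)) /\
    is_singleton (slice (Zset d g k) a4) (emb a4 (3 * PI / 2)) /\
    (forall tau, ~ (a1 <= tau <= a2) -> ~ (a3 <= tau <= a4) -> is_empty (slice (Zset d g k) tau)) /\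
    supercritical d g k a1 (3 * PI / 2) /\
    subcritical d g k a2 (PI / 2) /\
    supercritical d g k a3 (PI / 2) /\
    subcritical d g k a4 (3 * PI / 2) /\
    exists c1 c2 A1 A2,
      simple_closed_param c1 A1 /\ simple_closed_param c2 A2 /\
      (forall p, ~ (A1 p /\ A2 p)) /\
      (forall p, Zset d g k p <-> (A1 p \/ A2 p)) /\
      ~ contractible_in_C c1 /\ ~ contractible_in_C c2.

Definition Zset_one_noncontractible_loop (d g k : R) : Prop :=
  exists b1 b2, 0 < b1 < b2 /\ b2 < 1 /\
    (forall tau, b1 < tau < b2 -> has_exactly_two (slice (Zset d g k) tau)) /\
    is_singleton (slice (Zset d g k) b1) (emb b1 (PI / 2)) /\
    is_singleton (slice (Zset d g k) b2) (emb b2 (3 * PI / 2)) /\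
    (forall tau, ~ (b1 <= tau <= b2) -> is_empty (slice (Zset d g k) tau)) /\
    supercritical d g k b1 (PI / 2) /\
    subcritical d g k b2 (3 * PI / 2) /\
    exists c, simple_closed_param c (Zset d g k) /\ ~ contractible_in_C c.

Section One_loop.
Variables (d g k x1 x2 : R).
Hypotheses (hd : 1 < d) (hdP : d < Phi) (hg : 0 < g) (hk : 0 < k < 1).
Hypotheses (hM1 : g * (1 - k) < Fexp d (xc d)) (hM2 : Fexp d (xc d) < g * (1 + k)).
Hypotheses (Hx1 : x1 < xc d) (Hx2 : xc d < x2 < 0).
Hypotheses (E1 : Fexp d x1 = g * (1 - k)) (E2 : Fexp d x2 = g * (1 - k)).

Lemma one_loop_slices_two tau : exp x1 < tau < exp x2 -> has_exactly_two (slice (Zset d g k) tau).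
Proof.
  apply slices_two_on; auto; [lra|]. intros x Hx.
  pose proof (Fexp_above_between d hd hdP x1 x2 _ ltac:(lra) E1 E2 x).
  pose proof (Fexp_le_max d hd hdP x). lra.
Qed.

Lemma one_loop_slices_empty tau : ~ (exp x1 <= tau <= exp x2) -> is_empty (slice (Zset d g k) tau).
Proof.
  intros Ht. apply (slices_empty_off d g k hg hk (fun x => x1 <= x <= x2)).
  - intros x _ Hx. left. apply (Fexp_above_between d hd hdP x1 x2 _ ltac:(lra) E1 E2). lra.
  - intros Htau. rewrite <- exp_le_le_iff; auto.
Qed.

Lemma one_contractible_loop_of_crossings : Zset_one_contractible_loop d g k.
Proof.
  unfold Zset_one_contractible_loop.
  assert (Hexp : 0 < exp x1 < exp x2 /\ exp x2 < 1)
    by (rewrite <- exp_0; pose proof (exp_pos x1); split; [split|]; auto; apply exp_increasing; lra).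
  pose proof (slice_bottom_exp d g k hg hk x1 ltac:(lra) E1) as S1.
  pose proof (slice_bottom_exp d g k hg hk x2 ltac:(lra) E2) as S2.
  assert (Hfold : supercritical d g k (exp x1) (3 * PI / 2) /\
                  subcritical d g k (exp x2) (3 * PI / 2)).
  { apply (fold_pair _ _ _ _ _ _ _ 1 1); try lra;
      try (rewrite ln_exp, level_3PI_2; auto); try exact cos_3PI_2; try (eexists; eassumption).
    - exact one_loop_slices_two.
    - intros tau Ht. apply one_loop_slices_empty. lra.
    - intros tau Ht. apply one_loop_slices_empty. lra. }
  exists (exp x1), (exp x2).
  split; [lra|]. split; [lra|]. split; [exact one_loop_slices_two|].
  split; [exact S1|]. split; [exact S2|]. split; [exact one_loop_slices_empty|].
  split; [exact (proj1 Hfold)|]. split; [exact (proj2 Hfold)|].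
  exists (arc_curve d g k x1 x2). split.
  - apply arc_curve_simple; auto; lra.
  - apply arc_curve_contractible; auto; lra.
Qed.

End One_loop.

Lemma Zset_one_contractible_loop_in_band k g d M : 0 < k < 1 -> 0 < g -> 1 < d -> d < Phi ->
  is_max_F d M -> M / (1 + k) < g < M / (1 - k) -> Zset_one_contractible_loop d g k.
Proof.
  intros hk hg hd hdP HM [Hg1 Hg2].
  rewrite (is_max_F_Fexp d hd hdP M HM), Rdiv_lt_iff in Hg1 by lra.
  rewrite (is_max_F_Fexp d hd hdP M HM), lt_Rdiv_iff in Hg2 by lra.
  destruct (Fexp_crossing_left d hd hdP (g * (1 - k)) ltac:(nra)) as [x1 [Hx1 E1]].
  destruct (Fexp_crossing_right d hd hdP (g * (1 - k)) ltac:(nra)) as [x2 [Hx2 E2]].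
  apply (one_contractible_loop_of_crossings d g k x1 x2); auto; lra.
Qed.

Section Two_loops.
Variables (d g k x1 x2 x3 x4 : R).
Hypotheses (hd : 1 < d) (hdP : d < Phi) (hg : 0 < g) (hk : 0 < k < 1).
Hypotheses (Hx12 : x1 < x2) (Hx2 : x2 < xc d) (Hx3 : xc d < x3) (Hx34 : x3 < x4) (Hx4 : x4 < 0).
Hypotheses (E1 : Fexp d x1 = g * (1 - k)) (E2 : Fexp d x2 = g * (1 + k))
           (E3 : Fexp d x3 = g * (1 + k)) (E4 : Fexp d x4 = g * (1 - k)).

Lemma two_loops_band x :
  ((x1 < x < x2 \/ x3 < x < x4) -> g * (1 - k) < Fexp d x < g * (1 + k)) /\
  (~ (x1 <= x <= x2) -> ~ (x3 <= x <= x4) ->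
     Fexp d x < g * (1 - k) \/ g * (1 + k) < Fexp d x).
Proof.
  pose proof (Fexp_above_between d hd hdP x1 x4 _ ltac:(lra) E1 E4 x).
  pose proof (Fexp_above_between d hd hdP x2 x3 _ ltac:(lra) E2 E3 x).
  split; intros; [split|]; lra.
Qed.

Lemma two_loops_slices_two tau : (exp x1 < tau < exp x2 \/ exp x3 < tau < exp x4) ->
  has_exactly_two (slice (Zset d g k) tau).
Proof.
  intros [Ht|Ht]; [apply (slices_two_on d g k hg hk x1 x2)|apply (slices_two_on d g k hg hk x3 x4)];
    auto; try lra; intros x Hx; apply two_loops_band; auto.
Qed.

Lemma two_loops_slices_empty tau : ~ (exp x1 <= tau <= exp x2) -> ~ (exp x3 <= tau <= exp x4) ->
  is_empty (slice (Zset d g k) tau).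
Proof.
  intros H12 H34.
  apply (slices_empty_off d g k hg hk (fun x => x1 <= x <= x2 \/ x3 <= x <= x4)).
  - intros x _ Hx. apply two_loops_band; tauto.
  - intros Ht. rewrite <- !exp_le_le_iff by auto. tauto.
Qed.

Let c1 := graph_curve (Fexp d) (level g k) x1 x2.
Let c2 := graph_curve (fun x => - Fexp d x) (fun s => - level g k s) x3 x4.
Let A1 := graph_set (Fexp d) (level g k) x1 x2.
Let A2 := graph_set (fun x => - Fexp d x) (fun s => - level g k s) x3 x4.

Lemma two_loops_Zset p : Zset d g k p <-> A1 p \/ A2 p.
Proof.
  rewrite Zset_log. split.
  - intros [x [s [Hx [Hs Hp]]]]. pose proof (level_range g k s hg ltac:(lra)).
    destruct (Rle_dec x1 x); destruct (Rle_dec x x2);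
      [left; exists x, s; repeat split; auto; lra| | |];
      (destruct (Rle_dec x3 x); destruct (Rle_dec x x4);
        [right; exists x, s; repeat split; auto; lra| | |]);
      exfalso; destruct (proj2 (two_loops_band x)); lra.
  - intros [[x [s [Hx [Hs Hp]]]]|[x [s [Hx [Hs Hp]]]]]; exists x, s; repeat split; auto; lra.
Qed.

Lemma two_loops_disjoint p : ~ (A1 p /\ A2 p).
Proof.
  intros [[x [s [Hx [_ Hp]]]] [x' [s' [Hx' [_ Hp']]]]]. rewrite Hp' in Hp.
  injection Hp as Ex _ _. apply exp_inv in Ex. lra.
Qed.

Lemma two_loops_curves : simple_closed_param c1 A1 /\ simple_closed_param c2 A2 /\
  ~ contractible_in_C c1 /\ ~ contractible_in_C c2.
Proof.
  assert (Hl : forall s, g * (1 - k) <= level g k s <= g * (1 + k)) by (intro; apply level_range; lra).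
  split; [|split; [|split; apply graph_curve_not_contractible]]; apply graph_curve_simple; try lra.
  - apply continuity_Fexp.
  - intros x y Hx Hxy Hy. apply Fexp_increasing; auto; lra.
  - apply continuity_level.
  - intro s. rewrite E1, E2. apply Hl.
  - apply level_on_circle.
  - apply (continuity_opp (Fexp d)), continuity_Fexp.
  - intros x y Hx Hxy Hy. pose proof (Fexp_decreasing d hd hdP x y). lra.
  - apply continuity_opp_level.
  - intro s. rewrite E3, E4. pose proof (Hl s). lra.
  - intros s s' Ec Es. rewrite (level_on_circle g k s s'); auto.
Qed.

Lemma two_noncontractible_loops_of_crossings : Zset_two_noncontractible_loops d g k.
Proof.
  unfold Zset_two_noncontractible_loops.
  pose proof (xc_neg d hd hdP). pose proof (exp_pos x1).
  assert (Hexp : exp x1 < exp x2 /\ exp x2 < exp x3 /\ exp x3 < exp x4 /\ exp x4 < 1)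
    by (rewrite <- exp_0; repeat split; apply exp_increasing; lra).
  assert (Hfold12 : supercritical d g k (exp x1) (3 * PI / 2) /\ subcritical d g k (exp x2) (PI / 2)).
  { apply (fold_pair _ _ _ _ _ _ _ 1 (exp x3 - exp x2)); try lra;
      try (rewrite ln_exp; rewrite ?level_3PI_2, ?level_PI_2; auto);
      try exact cos_3PI_2; try exact cos_PI2;
      try (eexists; apply slice_bottom_exp; auto; lra); try (eexists; apply slice_top_exp; auto; lra);
      intros tau Ht; [apply two_loops_slices_two|apply two_loops_slices_empty..]; lra. }
  assert (Hfold34 : supercritical d g k (exp x3) (PI / 2) /\ subcritical d g k (exp x4) (3 * PI / 2)).
  { apply (fold_pair _ _ _ _ _ _ _ (exp x3 - exp x2) 1); try lra;
      try (rewrite ln_exp; rewrite ?level_3PI_2, ?level_PI_2; auto);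
      try exact cos_3PI_2; try exact cos_PI2;
      try (eexists; apply slice_bottom_exp; auto; lra); try (eexists; apply slice_top_exp; auto; lra);
      intros tau Ht; [apply two_loops_slices_two|apply two_loops_slices_empty..]; lra. }
  exists (exp x1), (exp x2), (exp x3), (exp x4).
  split; [lra|]. split; [lra|]. split; [lra|]. split; [exact two_loops_slices_two|].
  split; [apply slice_bottom_exp; auto; lra|]. split; [apply slice_top_exp; auto; lra|].
  split; [apply slice_top_exp; auto; lra|]. split; [apply slice_bottom_exp; auto; lra|].
  split; [exact two_loops_slices_empty|].
  split; [exact (proj1 Hfold12)|]. split; [exact (proj2 Hfold12)|].
  split; [exact (proj1 Hfold34)|]. split; [exact (proj2 Hfold34)|].
  destruct two_loops_curves as [S1 [S2 [N1 N2]]].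
  exists c1, c2, A1, A2. split; [exact S1|]. split; [exact S2|].
  split; [exact two_loops_disjoint|]. split; [exact two_loops_Zset|]. auto.
Qed.

End Two_loops.

Lemma Zset_two_noncontractible_loops_below_band k g d M : 0 < k < 1 -> 0 < g -> 1 < d ->
  d < Phi -> is_max_F d M -> g < M / (1 + k) -> Zset_two_noncontractible_loops d g k.
Proof.
  intros hk hg hd hdP HM Hg.
  rewrite (is_max_F_Fexp d hd hdP M HM), lt_Rdiv_iff in Hg by lra.
  destruct (Fexp_crossing_left d hd hdP (g * (1 - k)) ltac:(nra)) as [x1 [Hx1 E1]].
  destruct (Fexp_crossing_left d hd hdP (g * (1 + k)) ltac:(nra)) as [x2 [Hx2 E2]].
  destruct (Fexp_crossing_right d hd hdP (g * (1 + k)) ltac:(nra)) as [x3 [Hx3 E3]].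
  destruct (Fexp_crossing_right d hd hdP (g * (1 - k)) ltac:(nra)) as [x4 [Hx4 E4]].
  apply (two_noncontractible_loops_of_crossings d g k x1 x2 x3 x4); auto; try lra.
  - apply (Fexp_increasing_inv d hd hdP); try lra. rewrite E1, E2. nra.
  - apply (Fexp_decreasing_inv d hd hdP); try lra. rewrite E3, E4. nra.
Qed.

Section Beyond_Phi_loop.
Variables (d g k x1 x2 : R).
Hypotheses (hd : 1 < d) (hdP : Phi < d) (hg : 0 < g) (hk : 0 < k < 1).
Hypotheses (Hx12 : x1 < x2) (Hx2 : x2 < 0).
Hypotheses (E1 : Fexp d x1 = g * (1 + k)) (E2 : Fexp d x2 = g * (1 - k)).

Lemma beyond_band x : (x1 < x < x2 -> g * (1 - k) < Fexp d x < g * (1 + k)) /\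
  (x < x1 -> g * (1 + k) < Fexp d x) /\ (x2 < x -> Fexp d x < g * (1 - k)).
Proof.
  pose proof (Fexp_decreasing_all d hd hdP x1 x). pose proof (Fexp_decreasing_all d hd hdP x x2).
  pose proof (Fexp_decreasing_all d hd hdP x x1). pose proof (Fexp_decreasing_all d hd hdP x2 x).
  repeat split; intros; lra.
Qed.

Lemma beyond_slices_two tau : exp x1 < tau < exp x2 -> has_exactly_two (slice (Zset d g k) tau).
Proof. apply slices_two_on; auto; [lra|]. intros x Hx. apply beyond_band. exact Hx. Qed.

Lemma beyond_slices_empty tau : ~ (exp x1 <= tau <= exp x2) -> is_empty (slice (Zset d g k) tau).
Proof.
  intros Ht. apply (slices_empty_off d g k hg hk (fun x => x1 <= x <= x2)).
  - intros x _ Hx. pose proof (beyond_band x). destruct (Rlt_dec x x1); [right|left]; lra.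
  - intros Htau. rewrite <- exp_le_le_iff; auto.
Qed.

Lemma beyond_Zset : forall p, Zset d g k p <->
  graph_set (fun x => - Fexp d x) (fun s => - level g k s) x1 x2 p.
Proof.
  intro p. rewrite Zset_log. split.
  - intros [x [s [Hx [Hs Hp]]]]. pose proof (level_range g k s hg ltac:(lra)).
    pose proof (beyond_band x). exists x, s. split; [|split; [lra|exact Hp]].
    destruct (Rlt_dec x x1); [lra|]. destruct (Rlt_dec x2 x); lra.
  - intros [x [s [Hx [Hs Hp]]]]. exists x, s. repeat split; auto; lra.
Qed.

Lemma one_noncontractible_loop_of_crossings : Zset_one_noncontractible_loop d g k.
Proof.
  unfold Zset_one_noncontractible_loop.
  assert (Hexp : 0 < exp x1 < exp x2 /\ exp x2 < 1)
    by (rewrite <- exp_0; pose proof (exp_pos x1); split; [split|]; auto; apply exp_increasing; lra).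
  pose proof (slice_top_exp d g k hg hk x1 ltac:(lra) E1) as S1.
  pose proof (slice_bottom_exp d g k hg hk x2 ltac:(lra) E2) as S2.
  assert (Hfold : supercritical d g k (exp x1) (PI / 2) /\ subcritical d g k (exp x2) (3 * PI / 2)).
  { apply (fold_pair _ _ _ _ _ _ _ 1 1); try lra;
      try (rewrite ln_exp; rewrite ?level_3PI_2, ?level_PI_2; auto);
      try exact cos_3PI_2; try exact cos_PI2; try (eexists; eassumption).
    - exact beyond_slices_two.
    - intros tau Ht. apply beyond_slices_empty. lra.
    - intros tau Ht. apply beyond_slices_empty. lra. }
  exists (exp x1), (exp x2).
  split; [lra|]. split; [lra|]. split; [exact beyond_slices_two|].
  split; [exact S1|]. split; [exact S2|]. split; [exact beyond_slices_empty|].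
  split; [exact (proj1 Hfold)|]. split; [exact (proj2 Hfold)|].
  exists (graph_curve (fun x => - Fexp d x) (fun s => - level g k s) x1 x2).
  split; [|apply graph_curve_not_contractible].
  replace (Zset d g k) with (graph_set (fun x => - Fexp d x) (fun s => - level g k s) x1 x2)
    by (apply functional_extensionality; intro p; apply propositional_extensionality;
        symmetry; apply beyond_Zset).
  apply graph_curve_simple; try lra.
  - apply (continuity_opp (Fexp d)), continuity_Fexp.
  - intros x y Hx Hxy Hy. pose proof (Fexp_decreasing_all d hd hdP x y). lra.
  - apply continuity_opp_level.
  - intro s. rewrite E1, E2. pose proof (level_range g k s hg ltac:(lra)). lra.
  - intros s s' Ec Es. rewrite (level_on_circle g k s s'); auto.
Qed.

End Beyond_Phi_loop.

Lemma Zset_one_noncontractible_loop_beyond_Phi k g d : 0 < k < 1 -> 0 < g -> 1 < d ->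
  Phi < d -> Zset_one_noncontractible_loop d g k.
Proof.
  intros hk hg hd hdP.
  destruct (Fexp_crossing_beyond d (g * (1 + k)) hd hdP ltac:(nra)) as [x1 [Hx1 E1]].
  destruct (Fexp_crossing_beyond d (g * (1 - k)) hd hdP ltac:(nra)) as [x2 [Hx2 E2]].
  apply (one_noncontractible_loop_of_crossings d g k x1 x2); auto.
  destruct (Rlt_dec x1 x2) as [|Hge]; auto. destruct (Req_dec x1 x2) as [->|]; [nra|].
  pose proof (Fexp_decreasing_all d hd hdP x2 x1). nra.
Qed.

Theorem mainTheorem3 (k gam d : R) (hk : 0 < k < 1) (hgam : 0 < gam) (hd : 1 < d) :
  (* (W) *)
  (forall M, d < Phi -> is_max_F d M -> gam > M / (1 - k) ->
     is_empty (Zset d gam k)) /\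
  (* (X) *)
  (forall M, d < Phi -> is_max_F d M -> M / (1 + k) < gam < M / (1 - k) ->
     exists tau1 tau2, 0 < tau1 < tau2 /\ tau2 < 1 /\
       (forall tau, tau1 < tau < tau2 -> has_exactly_two (slice (Zset d gam k) tau)) /\
       is_singleton (slice (Zset d gam k) tau1) (emb tau1 (3 * PI / 2)) /\
       is_singleton (slice (Zset d gam k) tau2) (emb tau2 (3 * PI / 2)) /\
       (forall tau, ~ (tau1 <= tau <= tau2) -> is_empty (slice (Zset d gam k) tau)) /\
       supercritical d gam k tau1 (3 * PI / 2) /\
       subcritical d gam k tau2 (3 * PI / 2) /\
       exists c, simple_closed_param c (Zset d gam k) /\ contractible_in_C c) /\
  (* (Y) *)
  (forall M, d < Phi -> is_max_F d M -> gam < M / (1 + k) ->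
     exists a1 a2 a3 a4, 0 < a1 < a2 /\ a2 < a3 < a4 /\ a4 < 1 /\
       (forall tau, (a1 < tau < a2 \/ a3 < tau < a4) ->
          has_exactly_two (slice (Zset d gam k) tau)) /\
       is_singleton (slice (Zset d gam k) a1) (emb a1 (3 * PI / 2)) /\
       is_singleton (slice (Zset d gam k) a2) (emb a2 (PI / 2)) /\
       is_singleton (slice (Zset d gam k) a3) (emb a3 (PI / 2)) /\
       is_singleton (slice (Zset d gam k) a4) (emb a4 (3 * PI / 2)) /\
       (forall tau, ~ (a1 <= tau <= a2) -> ~ (a3 <= tau <= a4) ->
          is_empty (slice (Zset d gam k) tau)) /\
       supercritical d gam k a1 (3 * PI / 2) /\
       subcritical d gam k a2 (PI / 2) /\
       supercritical d gam k a3 (PI / 2) /\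
       subcritical d gam k a4 (3 * PI / 2) /\
       exists c1 c2 A1 A2,
         simple_closed_param c1 A1 /\ simple_closed_param c2 A2 /\
         (forall p, ~ (A1 p /\ A2 p)) /\
         (forall p, Zset d gam k p <-> (A1 p \/ A2 p)) /\
         ~ contractible_in_C c1 /\ ~ contractible_in_C c2) /\
  (* (Z) *)
  (Phi < d ->
     exists b1 b2, 0 < b1 < b2 /\ b2 < 1 /\
       (forall tau, b1 < tau < b2 -> has_exactly_two (slice (Zset d gam k) tau)) /\
       is_singleton (slice (Zset d gam k) b1) (emb b1 (PI / 2)) /\
       is_singleton (slice (Zset d gam k) b2) (emb b2 (3 * PI / 2)) /\
       (forall tau, ~ (b1 <= tau <= b2) -> is_empty (slice (Zset d gam k) tau)) /\
       supercritical d gam k b1 (PI / 2) /\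
       subcritical d gam k b2 (3 * PI / 2) /\
       exists c, simple_closed_param c (Zset d gam k) /\ ~ contractible_in_C c).
Proof.
  split; [|split; [|split]].
  - intros M _. apply Zset_empty_above_band; auto.
  - intros M hdP. apply Zset_one_contractible_loop_in_band; auto.
  - intros M hdP. apply Zset_two_noncontractible_loops_below_band; auto.
  - apply Zset_one_noncontractible_loop_beyond_Phi; auto.
Qed.
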